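(* Consider a single switching curve, either $y=x^2$ or $y=-x^2$, with the corresponding Melnikov function $M$ described in the context, and let $H(n)$ be the maximum, over all real coefficient choices (polynomials of degree at most $n$) with $M\not\equiv0$, of the number of zeros of $M$ in $(0,+\infty)$ counted with multiplicity. Then $H(1)=3$ (at most $3$ zeros for $n=1$, and $3$ zeros are attained for suitable coefficients), and for every $n\ge 2$, $H(n)\le 2n+5\left[\tfrac{n-1}{2}\right]+4$.
   Context: Fix $n\ge1$ and real polynomials $f_1,g_1,f_2,g_2$ in $(x,y)$ of degree at most $n$ with arbitrary real coefficients. For $h>0$ let $u=\sqrt{(\sqrt{1+4h}-1)/2}$ (so $u>0$, $u^4+u^2=h$), and let $\Gamma_h$ be the circle $x^2+y^2=h$, traversed clockwise (orbits of $\dot x=y,\dot y=-x$). Case $y=x^2$: the system is $\dot x=y+\varepsilon f_1$, $\dot y=-x+\varepsilon g_1$ for $y<x^2$ and $\dot x=y+\varepsilon f_2$, $\dot y=-x+\varepsilon g_2$ for $y>x^2$; with $A=(u,u^2)$, $D=(-u,u^2)$, let $\widehat{AD}$ be the clockwise arc of $\Gamma_h$ from $A$ to $D$ through $(\sqrt h,0),(0,-\sqrt h),(-\sqrt h,0)$ and $\widehat{DA}$ the clockwise arc from $D$ to $A$ through $(0,\sqrt h)$; then $M(h)=\int_{\widehat{AD}}g_1dx-f_1dy+\int_{\widehat{DA}}g_2dx-f_2dy$. Case $y=-x^2$: the system uses $(f_1,g_1)$ for $y>-x^2$ and $(f_2,g_2)$ for $y<-x^2$; with $B=(u,-u^2)$,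 $C=(-u,-u^2)$, let $\widehat{CB}$ be the clockwise arc from $C$ to $B$ through $(-\sqrt h,0),(0,\sqrt h),(\sqrt h,0)$ and $\widehat{BC}$ the clockwise arc from $B$ to $C$ through $(0,-\sqrt h)$; then $M(h)=\int_{\widehat{CB}}g_1dx-f_1dy+\int_{\widehat{BC}}g_2dx-f_2dy$. $[p]$ is the integer part of $p$. *)

From Stdlib Require Import Reals Lra Lia List ClassicalEpsilon.
Open Scope R_scope.

(* A real polynomial of degree at most n in (x,y), given by an arbitrary
   coefficient table a : nat -> nat -> R (only a i j with i + j <= n matter). *)
Definition poly2 (n : nat) (a : nat -> nat -> R) (x y : R) : R :=
  sum_f_R0 (fun i => sum_f_R0 (fun j => a i j * x ^ i * y ^ j) (n - i)) n.

(* Riemann integral of f on [a,b] (0 if not Riemann integrable; the integrands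
   used below are continuous, hence integrable). *)
Definition Rint (f : R -> R) (a b : R) : R :=
  match excluded_middle_informative (exists _ : Riemann_integrable f a b, True) with
  | left H => RiemannInt (proj1_sig (constructive_indefinite_description _ H))
  | right _ => 0
  end.

(* Line integral of  G dx - F dy  along the circle x^2+y^2 = r^2 traversed
   clockwise (orbit of x'=y, y'=-x), parametrized by x = r sin t, y = r cos t,
   for the parameter t running from t1 to t2 (t1 <= t2). *)
Definition arc_int (F G : R -> R -> R) (r t1 t2 : R) : R :=
  Rint (fun t => G (r * sin t) (r * cos t) * (r * cos t)
               - F (r * sin t) (r * cos t) * (- (r * sin t))) t1 t2.

(* u = sqrt((sqrt(1+4h)-1)/2), so that u^4 + u^2 = h. *)
Definition u_of (h : R) : R := sqrt ((sqrt (1 + 4 * h) - 1) / 2).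

(* Parameter of A = (u,u^2) on the circle of radius sqrt h:
   sin tA = u / sqrt h, cos tA = u^2 / sqrt h, tA in (0, pi/2). *)
Definition tA (h : R) : R := atan (/ u_of h).

Inductive curve : Set := ParabolaUp | ParabolaDown .

(* With t = tA h:
   - y = x^2 : A at t, D at 2pi - t; arc AD = [t, 2pi - t] (through
     (sqrt h,0),(0,-sqrt h),(-sqrt h,0)); arc DA = [2pi - t, 2pi + t] (through (0,sqrt h)).
   - y = -x^2: B at pi - t, C at pi + t; arc CB = [pi + t, 3pi - t]
     (through (-sqrt h,0),(0,sqrt h),(sqrt h,0)); arc BC = [pi - t, pi + t]. *)
Definition melnikov (c : curve) (n : nat) (f1 g1 f2 g2 : nat -> nat -> R) (h : R) : R :=
  let r := sqrt h in
  let t := tA h in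
  let F1 := poly2 n f1 in let G1 := poly2 n g1 in
  let F2 := poly2 n f2 in let G2 := poly2 n g2 in
  match c with
  | ParabolaUp =>
      arc_int F1 G1 r t (2 * PI - t) + arc_int F2 G2 r (2 * PI - t) (2 * PI + t)
  | ParabolaDown =>
      arc_int F1 G1 r (PI + t) (3 * PI - t) + arc_int F2 G2 r (PI - t) (PI + t)
  end.

Inductive kth_deriv : nat -> (R -> R) -> (R -> R) -> Prop :=
  | kd0 : forall f, kth_deriv 0 f f
  | kdS : forall k f f' g, kth_deriv k f f' ->
            (forall x, 0 < x -> derivable_pt_lim f' x (g x)) ->
            kth_deriv (S k) f g.

Definition zero_mult_ge (f : R -> R) (h0 : R) (m : nat) : Prop :=
  forall k, (k < m)%nat -> exists g, kth_deriv k f g /\ g h0 = 0.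

Definition zero_family (f : R -> R) (l : list (R * nat)) : Prop :=
  NoDup (map fst l) /\
  Forall (fun p => 0 < fst p /\ (1 <= snd p)%nat /\ zero_mult_ge f (fst p) (snd p)) l.

Definition zeros_at_most (f : R -> R) (N : nat) : Prop :=
  forall l, zero_family f l -> (list_sum (map snd l) <= N)%nat.

Definition zeros_at_least (f : R -> R) (N : nat) : Prop :=
  exists l, zero_family f l /\ (N <= list_sum (map snd l))%nat.

Definition not_identically_zero (f : R -> R) : Prop := exists h, 0 < h /\ f h <> 0.

From Stdlib Require Import Reals Lra Lia ClassicalEpsilon Classical.
From Coquelicot Require Import Coquelicot.
(* Imported after Coquelicot so that [Forall] denotes the list predicate. *)
From Stdlib Require Import List Sorting Permutation.
Open Scope R_scope.

(* 1. Reparametrization.  h = u^2 + u^4 is a bijection of (0,+oo) with inverse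
      u_of, and zeros with their multiplicities are transported along it.  On
      the circle of radius r = sqrt h the switching points are at the angle
      tau u = atan (1/u), with r sin tau = u and r cos tau = u^2.
   2. Normal form.  Integrating r^(a+b) sin^a t cos^b t over the arcs (reduction
      formulas for the primitives, 2pi-periodicity, the symmetry t -> t + pi)
      yields  V u := M (u^2 + u^4) = u S(u^2) + h C(h) + h Q(h) tau(u)  with
      deg S <= n and deg C, deg Q < K := [(n+1)/2].
   3. Counting.  By Rolle's theorem, differentiating and then multiplying by a
      rational function without zeros on (0,+oo) loses at most one zero.
      Dividing each derivative by h'(u), K+1 such steps kill the polynomial in
      h and the tau-term of the normal form and leave an even polynomial over a
      positive denominator; its degree gives 2n + 5[(n-1)/2] + 4.  For n = 1 a
      shorter chain (divide by h, differentiate once) gives 3.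
   4. Sharpness for n = 1.  Explicit linear perturbations give
      V u = alpha u + beta u^3 + gamma h tau + delta h, vanishing at u = 1,
      sqrt 3 and 1/sqrt 3. *)

Definition deriv_pos (f g : R -> R) := forall x, 0 < x -> derivable_pt_lim f x (g x).

Lemma derivable_pt_lim_ext_pos : forall f g x l, 0 < x -> (forall y, 0 < y -> f y = g y) ->
  derivable_pt_lim f x l -> derivable_pt_lim g x l.
Proof.
  unfold derivable_pt_lim; intros f g x l Hx Heq H eps Heps.
  destruct (H eps Heps) as [d Hd].
  assert (Hp : 0 < Rmin d x) by (apply Rmin_pos; [apply cond_pos | lra]).
  exists (mkposreal _ Hp). intros h hne hlt. simpl in hlt.
  assert (Hh: Rabs h < d) by (eapply Rlt_le_trans; [exact hlt| apply Rmin_l]).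
  assert (Hh2: Rabs h < x) by (eapply Rlt_le_trans; [exact hlt| apply Rmin_r]).
  rewrite <- !Heq; try lra.
  - apply Hd; auto.
  - assert (-h <= Rabs h) by (rewrite <- Rabs_Ropp; apply Rle_abs). lra.
Qed.

Lemma deriv_pos_ext : forall f g f' g', (forall y, 0 < y -> f y = g y) -> (forall y, 0 < y -> f' y = g' y) ->
  deriv_pos f f' -> deriv_pos g g'.
Proof. intros f g f' g' H1 H2 H x Hx. rewrite <- H2 by auto. eapply derivable_pt_lim_ext_pos; eauto. Qed.

Lemma deriv_pos_unique : forall f g1 g2, deriv_pos f g1 -> deriv_pos f g2 -> forall x, 0 < x -> g1 x = g2 x.
Proof. intros. eapply uniqueness_limite; eauto. Qed.

Lemma derivable_pt_lim_eq : forall f x l l', derivable_pt_lim f x l -> l = l' -> derivable_pt_lim f x l'.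
Proof. intros; subst; auto. Qed.

Lemma kth_deriv_0_inv : forall f g, kth_deriv 0 f g -> g = f.
Proof. intros f g H. inversion H; auto. Qed.

Lemma kth_deriv_cons : forall k f f' g, deriv_pos f f' -> kth_deriv k f' g -> kth_deriv (S k) f g.
Proof.
  intros k f f' g Hd H. induction H.
  - apply kdS with f. constructor. exact Hd.
  - eapply kdS; eauto.
Qed.

Lemma kth_deriv_uncons : forall k f g, kth_deriv (S k) f g -> exists f', deriv_pos f f' /\ kth_deriv k f' g.
Proof.
  induction k; intros f g H; inversion H; subst.
  - apply kth_deriv_0_inv in H1; subst. exists g. split; auto. constructor.
  - destruct (IHk _ _ H1) as [f'' [Hd Hk]]. exists f''. split; auto.
    apply kdS with f'; auto.
Qed.

Lemma kth_deriv_ext : forall k f1 f2 g, (forall x, 0 < x -> f1 x = f2 x) -> kth_deriv k f1 g ->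
  exists g', kth_deriv k f2 g' /\ forall x, 0 < x -> g' x = g x.
Proof.
  intros k f1 f2 g Heq H. induction H as [f|k f f' g Hk IH Hd].
  - exists f2. split. constructor. intros; symmetry; auto.
  - destruct (IH Heq) as [g' [Hk' He]]. exists g. split; auto.
    apply kdS with g'; auto. intros x Hx. apply derivable_pt_lim_ext_pos with f'; auto.
    intros; symmetry; auto.
Qed.

Lemma mult_ge_0 : forall f z, zero_mult_ge f z 0.
Proof. intros f z k Hk. lia. Qed.

Lemma mult_ge_root : forall f z m, zero_mult_ge f z (S m) -> f z = 0.
Proof. intros f z m H. destruct (H 0%nat ltac:(lia)) as [g [Hg Hz]].
  apply kth_deriv_0_inv in Hg; subst; auto. Qed.

Lemma mult_ge_1 : forall f z, f z = 0 -> zero_mult_ge f z 1.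
Proof. intros f z H k Hk. assert (k = 0%nat) by lia. subst. exists f; split; auto. constructor. Qed.

Lemma mult_ge_le : forall f z m m', zero_mult_ge f z m -> (m' <= m)%nat -> zero_mult_ge f z m'.
Proof. intros f z m m' H Hle k Hk. apply H. lia. Qed.

Lemma mult_ge_ext : forall f g z m, 0 < z -> (forall x, 0 < x -> f x = g x) -> zero_mult_ge f z m -> zero_mult_ge g z m.
Proof.
  intros f g z m Hz Heq H k Hk. destruct (H k Hk) as [h [Hh Hhz]].
  destruct (kth_deriv_ext _ _ _ _ Heq Hh) as [h' [Hh' He]]. exists h'. split; auto. rewrite He; auto.
Qed.

Lemma mult_ge_deriv_ex : forall f z m, 0 < z -> zero_mult_ge f z (S (S m)) -> exists f', deriv_pos f f' /\ zero_mult_ge f' z (S m).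
Proof.
  intros f z m Hz H.
  destruct (H 1%nat ltac:(lia)) as [g1 [Hg1 _]].
  destruct (kth_deriv_uncons _ _ _ Hg1) as [f0 [Hd0 _]].
  exists f0. split; auto. intros k Hk.
  destruct (H (S k) ltac:(lia)) as [g [Hg Hgz]].
  destruct (kth_deriv_uncons _ _ _ Hg) as [fk [Hdk Hk']].
  assert (Heq : forall x, 0 < x -> fk x = f0 x) by (intros; eapply deriv_pos_unique; eauto).
  destruct (kth_deriv_ext _ _ _ _ Heq Hk') as [g' [Hg' He]].
  exists g'. split; auto. rewrite He; auto.
Qed.

Lemma mult_ge_of_deriv : forall f f' z m, f z = 0 -> deriv_pos f f' -> zero_mult_ge f' z m -> zero_mult_ge f z (S m).
Proof.
  intros f f' z m H0 Hd H k Hk. destruct k.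
  - exists f; split; auto; constructor.
  - destruct (H k ltac:(lia)) as [g [Hg Hgz]]. exists g. split; auto.
    eapply kth_deriv_cons; eauto.
Qed.

Lemma mult_ge_deriv : forall f g z m, 0 < z -> zero_mult_ge f z (S m) -> deriv_pos f g -> zero_mult_ge g z m.
Proof.
  intros f g z m Hz H Hd. destruct m. apply mult_ge_0.
  destruct (mult_ge_deriv_ex _ _ _ Hz H) as [f' [Hd' H']].
  eapply mult_ge_ext; [exact Hz| |exact H']. intros; eapply deriv_pos_unique; eauto.
Qed.

Lemma mult_ge_plus : forall m f g z, 0 < z -> zero_mult_ge f z m -> zero_mult_ge g z m -> zero_mult_ge (fun x => f x + g x) z m.
Proof.
  induction m; intros f g z Hz Hf Hg. apply mult_ge_0.
  destruct m.
  - apply mult_ge_1. rewrite (mult_ge_root _ _ _ Hf), (mult_ge_root _ _ _ Hg). lra.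
  - destruct (mult_ge_deriv_ex _ _ _ Hz Hf) as [f' [Hf' Zf]].
    destruct (mult_ge_deriv_ex _ _ _ Hz Hg) as [g' [Hg' Zg]].
    apply mult_ge_of_deriv with (fun x => f' x + g' x).
    + rewrite (mult_ge_root _ _ _ Hf), (mult_ge_root _ _ _ Hg). lra.
    + intros x Hx. apply (derivable_pt_lim_plus f g); auto.
    + apply IHm; auto.
Qed.

(* Real polynomials as coefficient lists (lowest degree first), with the
   evaluation morphism and the formal derivative. *)
Fixpoint peval (p : list R) (x : R) : R :=
  match p with nil => 0 | a :: q => a + x * peval q x end.

Fixpoint padd (p q : list R) : list R :=
  match p, q with
  | nil, _ => q
  | _, nil => p
  | a :: p', b :: q' => (a + b) :: padd p' q'
  end.

Definition pscale (c : R) (p : list R) := map (Rmult c) p.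

Fixpoint pmul (p q : list R) : list R :=
  match p with nil => nil | a :: p' => padd (pscale a q) (0 :: pmul p' q) end.

Fixpoint pder (p : list R) : list R :=
  match p with nil => nil | a :: p' =>
    match p' with nil => nil | _ => padd p' (0 :: pder p') end end.

Lemma peval_padd : forall p q x, peval (padd p q) x = peval p x + peval q x.
Proof. induction p; destruct q; simpl; intros; try rewrite IHp; ring. Qed.

Lemma peval_pscale : forall c p x, peval (pscale c p) x = c * peval p x.
Proof. induction p; simpl; intros; [ring| unfold pscale in IHp; rewrite IHp; ring]. Qed.

Lemma peval_pmul : forall p q x, peval (pmul p q) x = peval p x * peval q x.
Proof. induction p; simpl; intros. ring. rewrite peval_padd, peval_pscale. simpl. rewrite IHp. ring. Qed.

Lemma peval_pder : forall p x, derivable_pt_lim (peval p) x (peval (pder p) x).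
Proof.
  induction p; simpl; intros.
  - apply derivable_pt_lim_const.
  - destruct p as [|b p0].
    + simpl. replace (0) with (0 + (1 * 0 + x * 0)) at 1 by ring.
      apply (derivable_pt_lim_plus (fun _ => a) (fun y => y * 0)).
      apply derivable_pt_lim_const.
      apply (derivable_pt_lim_mult id (fun _ => 0)). apply derivable_pt_lim_id. apply derivable_pt_lim_const.
    + set (p := b :: p0) in *. change (derivable_pt_lim (fun x0 => a + x0 * peval p x0) x (peval (padd p (0 :: pder p)) x)).
    rewrite peval_padd. change (peval (0 :: pder p) x) with (0 + x * peval (pder p) x).
    replace (peval p x + (0 + x * peval (pder p) x)) with (0 + (1 * peval p x + x * peval (pder p) x)) by ring.
    apply (derivable_pt_lim_plus (fun _ => a) (fun y => y * peval p y)).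
    apply derivable_pt_lim_const.
    apply (derivable_pt_lim_mult id (peval p)). apply derivable_pt_lim_id. auto.
Qed.

(* Length (= degree + 1) bookkeeping for coefficient lists. *)
Lemma len_padd : forall p q, length (padd p q) = Nat.max (length p) (length q).
Proof. induction p; destruct q; simpl; auto. Qed.

Lemma len_pscale : forall c p, length (pscale c p) = length p.
Proof. intros; unfold pscale; apply length_map. Qed.

Lemma len_pder : forall p, (length (pder p) <= length p - 1)%nat.
Proof.
  induction p; simpl. lia. destruct p as [|b p0]. simpl; lia.
  rewrite len_padd. simpl in *. lia.
Qed.

Lemma len_pmul : forall p q, (1 <= length q)%nat -> (length (pmul p q) <= length p + length q - 1)%nat.
Proof.
  induction p; intros q Hq; simpl. lia.
  rewrite len_padd, len_pscale. simpl. specialize (IHp q Hq). lia.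
Qed.

Lemma len_pmul_pos : forall p q, (1 <= length p)%nat -> (1 <= length (pmul p q))%nat.
Proof. intros [|a p] q H; [simpl in H; lia|]. cbn [pmul]. rewrite len_padd. simpl. lia. Qed.

Lemma len_pmul_pder : forall p q, (1 <= length q)%nat ->
  (length (pmul (pder p) q) <= length p + length q - 2)%nat.
Proof.
  intros p q Hq. assert (H := len_pder p).
  destruct (pder p) as [|r l]; [simpl; lia|].
  assert (H' := len_pmul (r :: l) q Hq). simpl length in *. lia.
Qed.

Lemma peval_short : forall p x y, (length p <= 1)%nat -> peval p x = peval p y.
Proof. intros [|a [|b q]] x y H; simpl in *; try lia; ring. Qed.

Lemma len_iter_pder : forall i p, (length (Nat.iter i pder p) <= length p - i)%nat.
Proof. induction i; simpl; intros. lia. specialize (IHi p). pose proof (len_pder (Nat.iter i pder p)). lia. Qed.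

Lemma iter_pder_nil : forall i p, (length p <= i)%nat -> Nat.iter i pder p = nil.
Proof.
  intros. pose proof (len_iter_pder i p). destruct (Nat.iter i pder p); simpl in *; auto. lia.
Qed.

Lemma peval_len2 : forall p x, (length p <= 2)%nat -> peval p x = nth 0 p 0 + x * nth 1 p 0.
Proof. intros [|a [|b [|c p]]] x H; simpl in *; try lia; ring. Qed.

Lemma peval_len1 : forall p x, (length p <= 1)%nat -> peval p x = nth 0 p 0.
Proof. intros [|a [|b p]] x H; simpl in *; try lia; ring. Qed.

Fixpoint mono (m : nat) : list R := match m with O => 1 :: nil | S m' => 0 :: mono m' end.

Fixpoint ppow (q : list R) (j : nat) : list R := match j with O => 1 :: nil | S j' => pmul q (ppow q j') end.

Lemma peval_mono : forall m x, peval (mono m) x = x ^ m.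
Proof. induction m; simpl; intros; [ring| rewrite IHm; ring]. Qed.

Lemma len_mono : forall m, length (mono m) = S m.
Proof. induction m; simpl; auto. Qed.

Lemma peval_ppow : forall q j x, peval (ppow q j) x = (peval q x) ^ j.
Proof. induction j; simpl; intros; [ring| rewrite peval_pmul, IHj; ring]. Qed.

Lemma len_ppow2 : forall q k, length q = 2%nat -> (1 <= length (ppow q k) <= k + 1)%nat.
Proof.
  induction k; intros Hq. simpl; lia. simpl.
  specialize (IHk Hq). destruct q as [|a [|b [|]]]; simpl in Hq; try lia.
  cbn [pmul]. rewrite len_padd, len_pscale. simpl. rewrite len_padd, len_pscale. simpl. lia.
Qed.

Fixpoint pcomp (p q : list R) : list R :=
  match p with nil => nil | a :: p' => padd (a :: nil) (pmul (pcomp p' q) q) end.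

Lemma peval_pcomp : forall p q x, peval (pcomp p q) x = peval p (peval q x).
Proof. induction p; intros; [reflexivity|]. cbn [pcomp]. rewrite peval_padd, peval_pmul, IHp. simpl. ring. Qed.

Definition pos_rat (w : R -> R) := exists p q, (forall x, 0 < x -> peval q x <> 0) /\
  forall x, 0 < x -> w x = peval p x / peval q x.

Lemma pos_rat_deriv : forall w, pos_rat w -> exists w', pos_rat w' /\ deriv_pos w w'.
Proof.
  intros w [p [q [Hq Hw]]].
  exists (fun x => peval (padd (pmul (pder p) q) (pscale (-1) (pmul p (pder q)))) x / peval (pmul q q) x).
  split.
  - exists (padd (pmul (pder p) q) (pscale (-1) (pmul p (pder q)))), (pmul q q). split; auto.
    intros x Hx. rewrite peval_pmul. apply Rmult_integral_contrapositive; split; auto.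
  - intros x Hx. apply derivable_pt_lim_ext_pos with (fun y => peval p y / peval q y); auto.
    intros; symmetry; auto.
    assert (H := derivable_pt_lim_div (peval p) (peval q) x _ _ (peval_pder p x) (peval_pder q x) (Hq x Hx)).
    replace (peval (padd (pmul (pder p) q) (pscale (-1) (pmul p (pder q)))) x / peval (pmul q q) x)
      with ((peval (pder p) x * peval q x - peval (pder q) x * peval p x) / (peval q x)²).
    exact H.
    rewrite peval_padd, !peval_pmul, peval_pscale, peval_pmul. unfold Rsqr; field; auto.
Qed.

Lemma pos_rat_poly : forall p, pos_rat (peval p).
Proof. intros p. exists p, (1 :: nil). split. intros; simpl; lra. intros; simpl; field. Qed.

Lemma pos_rat_mul : forall a b, pos_rat a -> pos_rat b -> pos_rat (fun x => a x * b x).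
Proof.
  intros a b [pa [qa [H1 E1]]] [pb [qb [H2 E2]]]. exists (pmul pa pb), (pmul qa qb). split.
  intros x Hx. rewrite peval_pmul. apply Rmult_integral_contrapositive; split; auto.
  intros x Hx. rewrite E1, E2, !peval_pmul by auto. field. split; auto.
Qed.

Lemma pos_rat_ext : forall a b, pos_rat a -> (forall x, 0 < x -> a x = b x) -> pos_rat b.
Proof. intros a b [p [q [H E]]] He. exists p, q. split; auto. intros; rewrite <- He; auto. Qed.

Lemma pos_rat_pow : forall a k, pos_rat a -> pos_rat (fun x => a x ^ k).
Proof.
  induction k; intros H. apply pos_rat_ext with (peval (1 :: nil)). apply pos_rat_poly. intros; simpl; ring.
  apply pos_rat_ext with (fun x => a x * a x ^ k). apply pos_rat_mul; auto. intros; simpl; auto.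
Qed.

Lemma pos_rat_inv : forall a, pos_rat a -> (forall x, 0 < x -> a x <> 0) -> pos_rat (fun x => / a x).
Proof.
  intros a [p [q [H E]]] Hn. exists q, p. split.
  - intros x Hx Hp. apply (Hn x Hx). rewrite E, Hp by auto. unfold Rdiv; ring.
  - intros x Hx. rewrite E by auto. assert (peval p x <> 0).
    { intro Hp. apply (Hn x Hx). rewrite E, Hp by auto. unfold Rdiv; ring. }
    field. split; auto.
Qed.

(* The factor 1/(2x) used to undo the chain rule for u |-> p(u^2). *)
Lemma pos_rat_inv2x : pos_rat (fun x => / (2 * x)).
Proof. exists (1 :: nil), (0 :: 2 :: nil). split; intros x Hx; simpl. lra. field. lra. Qed.

(* Leibniz rule for multiplicities: f w vanishes at z at least as often as f. *)
Lemma mult_ge_mul : forall m f w z, 0 < z -> zero_mult_ge f z m -> pos_rat w -> zero_mult_ge (fun x => f x * w x) z m.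
Proof.
  induction m; intros f w z Hz Hf Hw. apply mult_ge_0.
  destruct m.
  - apply mult_ge_1. rewrite (mult_ge_root _ _ _ Hf). ring.
  - destruct (mult_ge_deriv_ex _ _ _ Hz Hf) as [f' [Hf' Zf]].
    destruct (pos_rat_deriv _ Hw) as [w' [Hw' Hdw]].
    apply mult_ge_of_deriv with (fun x => f' x * w x + f x * w' x).
    + rewrite (mult_ge_root _ _ _ Hf). ring.
    + intros x Hx. apply (derivable_pt_lim_mult f w); auto.
    + apply mult_ge_plus; auto. apply IHm; auto. apply mult_ge_le with (S (S m)); auto.
Qed.

Lemma mult_ge_comp : forall m M k z, 0 < z -> (forall x, 0 < x -> 0 < peval k x) ->
  zero_mult_ge M (peval k z) m -> zero_mult_ge (fun x => M (peval k x)) z m.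
Proof.
  induction m; intros M k z Hz Hk H. apply mult_ge_0.
  destruct m.
  - apply mult_ge_1. apply (mult_ge_root _ _ _ H).
  - destruct (mult_ge_deriv_ex _ _ _ (Hk z Hz) H) as [M' [HM' Zm]].
    apply mult_ge_of_deriv with (fun x => M' (peval k x) * peval (pder k) x).
    + apply (mult_ge_root _ _ _ H).
    + intros x Hx. apply (derivable_pt_lim_comp (peval k) M). apply peval_pder. apply HM'; auto.
    + apply mult_ge_mul; auto. apply pos_rat_poly.
Qed.

Definition zero_entry (f : R -> R) (p : R * nat) := 0 < fst p /\ (1 <= snd p)%nat /\ zero_mult_ge f (fst p) (snd p).

Definition total_mult (l : list (R * nat)) := list_sum (map snd l).

Definition lt_fst (p q : R * nat) := fst p < fst q.

Lemma rolle_pos : forall f g a b, deriv_pos f g -> 0 < a -> a < b -> f a = f b -> exists c, a < c < b /\ g c = 0.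
Proof.
  intros f g a b Hd Ha Hab Hf.
  assert (pr : forall x, a < x < b -> derivable_pt f x).
  { intros x Hx. exists (g x). apply Hd. lra. }
  assert (Hc : forall x, a <= x <= b -> continuity_pt f x).
  { intros x Hx. apply derivable_continuous_pt. exists (g x). apply Hd. lra. }
  destruct (Rolle f a b pr Hc Hab Hf) as [c [P Hc0]].
  exists c. split; auto.
  rewrite <- Hc0. symmetry. apply derive_pt_eq_0. apply Hd. lra.
Qed.

Definition deriv_entry (p : R * nat) : list (R * nat) :=
  match snd p with S (S m) => (fst p, S m) :: nil | _ => nil end.

Lemma deriv_entry_spec : forall f g p, deriv_pos f g -> zero_entry f p ->
  Forall (zero_entry g) (deriv_entry p) /\ Forall (fun q => fst q = fst p) (deriv_entry p) /\ (snd p <= total_mult (deriv_entry p) + 1)%nat.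
Proof.
  intros f g [z m] Hd [Hz [Hm HZ]]. unfold deriv_entry; simpl in *.
  destruct m as [|[|m]]; simpl.
  - lia.
  - split; [constructor|split;[constructor|unfold total_mult; simpl; lia]].
  - split; [|split].
    + constructor; [|constructor]. unfold zero_entry; simpl. repeat split; auto; try lia. eapply mult_ge_deriv; eauto.
    + constructor; auto.
    + unfold total_mult; simpl. lia.
Qed.

Lemma rolle_sorted : forall f g, deriv_pos f g -> forall l p, Sorted lt_fst (p :: l) -> Forall (zero_entry f) (p :: l) ->
  exists l', StronglySorted lt_fst l' /\ Forall (fun q => fst p <= fst q) l' /\
    Forall (zero_entry g) l' /\ (total_mult (p :: l) <= total_mult l' + 1)%nat.
Proof.
  intros f g Hd. induction l as [|q l IH]; intros p Hs Hf.
  - inversion Hf; subst. destruct (deriv_entry_spec f g p Hd H1) as [A [B C]].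
    exists (deriv_entry p). split; [|split; [|split]]; auto.
    + unfold deriv_entry. destruct (snd p) as [|[|]]; repeat constructor.
    + eapply Forall_impl; [|exact B]. intros a Ha. lra.
    + unfold total_mult in *; simpl. lia.
  - inversion Hs as [|? ? Hs1 Hh]; subst. inversion Hh as [|? ? Hlt]; subst. unfold lt_fst in Hlt.
    inversion Hf as [|? ? Hp Hfq]; subst.
    destruct (IH q Hs1 Hfq) as [l'' [S1 [S2 [S3 S4]]]].
    destruct Hp as [Hp0 [Hp1 Hp2]].
    inversion Hfq as [|? ? Hq ?]; subst. destruct Hq as [Hq0 [Hq1 Hq2]].
    rename Hlt into H0.
    assert (fa : f (fst p) = f (fst q)).
    { rewrite (mult_ge_root _ _ _ (mult_ge_le _ _ _ 1 Hp2 Hp1)), (mult_ge_root _ _ _ (mult_ge_le _ _ _ 1 Hq2 Hq1)). auto. }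
    destruct (rolle_pos f g _ _ Hd Hp0 H0 fa) as [c [Hc Hgc]].
    destruct (deriv_entry_spec f g p Hd (conj Hp0 (conj Hp1 Hp2))) as [A [B C]].
    assert (SS : StronglySorted lt_fst ((c, 1%nat) :: l'')).
    { constructor; auto. eapply Forall_impl; [|exact S2]. intros a Ha. unfold lt_fst; simpl. lra. }
    exists (deriv_entry p ++ (c, 1%nat) :: l''). split; [|split; [|split]].
    + unfold deriv_entry in *. destruct (snd p) as [|[|m]]; simpl; auto.
      constructor; auto. constructor. unfold lt_fst; simpl; lra.
      eapply Forall_impl; [|exact S2]. intros a Ha. unfold lt_fst; simpl. lra.
    + apply Forall_app. split.
      * eapply Forall_impl; [|exact B]. intros a Ha. lra.
      * constructor. simpl; lra. eapply Forall_impl; [|exact S2]. intros a Ha. lra.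
    + apply Forall_app. split; auto. constructor; auto.
      unfold zero_entry; simpl. repeat split; try lra; try lia. apply mult_ge_1; auto.
    + unfold total_mult in *. rewrite map_app, list_sum_app. simpl in *. lia.
Qed.

Fixpoint insert_fst (p : R * nat) (l : list (R * nat)) :=
  match l with
  | nil => p :: nil
  | q :: l' => if Rlt_dec (fst p) (fst q) then p :: l else q :: insert_fst p l'
  end.

Fixpoint sort_fst (l : list (R * nat)) :=
  match l with nil => nil | p :: l' => insert_fst p (sort_fst l') end.

Lemma insert_fst_perm : forall p l, Permutation (insert_fst p l) (p :: l).
Proof.
  induction l; simpl; auto. destruct (Rlt_dec (fst p) (fst a)); auto.
  eapply perm_trans. apply perm_skip. apply IHl. apply perm_swap.
Qed.

Lemma sort_fst_perm : forall l, Permutation (sort_fst l) l.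
Proof. induction l; simpl; auto. eapply perm_trans. apply insert_fst_perm. auto. Qed.

Lemma insert_fst_hd : forall q p l, HdRel lt_fst q l -> lt_fst q p -> HdRel lt_fst q (insert_fst p l).
Proof.
  intros q p l H Hqp. destruct l; simpl. constructor; auto.
  destruct (Rlt_dec (fst p) (fst p0)); constructor; auto. inversion H; auto.
Qed.

Lemma insert_fst_sorted : forall p l, Sorted lt_fst l -> ~ In (fst p) (map fst l) -> Sorted lt_fst (insert_fst p l).
Proof.
  induction l; intros Hs Hn; simpl. repeat constructor.
  destruct (Rlt_dec (fst p) (fst a)).
  - constructor; auto.
  - inversion Hs; subst. constructor.
    + apply IHl; auto. intro. apply Hn. simpl; auto.
    + apply insert_fst_hd; auto. unfold lt_fst. assert (fst p <> fst a) by (intro; apply Hn; simpl; auto). lra.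
Qed.

Lemma sort_fst_sorted : forall l, NoDup (map fst l) -> Sorted lt_fst (sort_fst l).
Proof.
  induction l; simpl; intros H; auto. inversion H; subst.
  apply insert_fst_sorted; auto. intro Hi. apply H2.
  eapply Permutation_in; [|exact Hi]. apply Permutation_map. apply sort_fst_perm.
Qed.

Lemma strongly_sorted_nodup : forall l, StronglySorted lt_fst l -> NoDup (map fst l).
Proof.
  induction l; simpl; intros H. constructor. inversion H; subst. constructor; auto.
  intro Hi. apply in_map_iff in Hi. destruct Hi as [x [Hx Hin]].
  rewrite Forall_forall in H3. specialize (H3 x Hin). unfold lt_fst in H3. lra.
Qed.

Lemma rolle_zero_family : forall f g l, deriv_pos f g -> zero_family f l ->
  exists l', zero_family g l' /\ (total_mult l <= total_mult l' + 1)%nat.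
Proof.
  intros f g l Hd [Hn Hf].
  destruct (sort_fst l) eqn:E.
  - exists nil. split. split; constructor.
    assert (P := sort_fst_perm l). rewrite E in P. apply Permutation_nil in P. subst.
    unfold total_mult; simpl; lia.
  - assert (S := sort_fst_sorted l Hn). rewrite E in S.
    assert (F : Forall (zero_entry f) (p :: l0)).
    { rewrite <- E. eapply Permutation_Forall. symmetry. apply sort_fst_perm.
      eapply Forall_impl; [|exact Hf]. intros a Ha; exact Ha. }
    destruct (rolle_sorted f g Hd l0 p S F) as [l' [S1 [S2 [S3 S4]]]].
    exists l'. split. split. apply strongly_sorted_nodup; auto.
    eapply Forall_impl; [|exact S3]. intros a Ha; exact Ha.
    unfold total_mult in *. rewrite <- E in S4.
    rewrite (Permutation_list_sum (Permutation_map snd (sort_fst_perm l))) in S4. lia.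
Qed.

Lemma zero_family_mul : forall f w l, pos_rat w -> zero_family f l -> zero_family (fun x => f x * w x) l.
Proof.
  intros f w l Hw [Hn Hf]. split; auto. eapply Forall_impl; [|exact Hf].
  intros [z m] [A [B C]]. repeat split; auto. simpl in *. apply mult_ge_mul; auto.
Qed.

Lemma zero_family_ext : forall f g l, (forall x, 0 < x -> f x = g x) -> zero_family f l -> zero_family g l.
Proof.
  intros f g l He [Hn Hf]. split; auto. eapply Forall_impl; [|exact Hf].
  intros [z m] [A [B C]]. repeat split; auto. simpl in *. eapply mult_ge_ext; eauto.
Qed.

Lemma zeros_at_most_mul : forall f1 f2 w N, pos_rat w -> (forall x, 0 < x -> f2 x = w x * f1 x) ->
  zeros_at_most f2 N -> zeros_at_most f1 N.
Proof.
  intros f1 f2 w N Hw He H l Hl. apply H. apply zero_family_ext with (fun x => f1 x * w x).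
  intros; rewrite He; auto; ring. apply zero_family_mul; auto.
Qed.

Lemma zeros_at_most_weaken : forall f N N', zeros_at_most f N -> (N <= N')%nat -> zeros_at_most f N'.
Proof. intros f N N' H Hle l Hl. specialize (H l Hl). lia. Qed.

Lemma deriv_pos_zero_const : forall f g, deriv_pos f g -> (forall x, 0 < x -> g x = 0) ->
  forall a b, 0 < a -> 0 < b -> f a = f b.
Proof.
  intros f g Hd Hg.
  assert (Hlt : forall a b, 0 < a -> a < b -> f a = f b).
  { intros a b Ha Hab.
    assert (pr : forall x, a < x < b -> derivable_pt f x).
    { intros x Hx. exists (g x). apply Hd. lra. }
    assert (Hc : forall x, a <= x <= b -> continuity_pt f x).
    { intros x Hx. apply derivable_continuous_pt. exists (g x). apply Hd. lra. }
    assert (Hz : forall x (P : a < x < b), derive_pt f x (pr x P) = 0).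
    { intros x P. rewrite <- (Hg x) by lra. apply derive_pt_eq_0. apply Hd. lra. }
    symmetry. apply (null_derivative_loc f a b pr Hc Hz). lra. }
  intros a b Ha Hb. destruct (Rtotal_order a b) as [h|[h|h]].
  - apply Hlt; auto.
  - subst; auto.
  - symmetry; apply Hlt; auto.
Qed.

Lemma zeros_at_most_const : forall f g, deriv_pos f g -> (forall x, 0 < x -> g x = 0) ->
  not_identically_zero f -> zeros_at_most f 0.
Proof.
  intros f g Hd Hg [x0 [Hx0 Hf0]] l [Hn Hf].
  destruct l as [|[z m] l]. unfold total_mult; simpl; lia.
  exfalso. inversion Hf; subst. destruct H1 as [A [B C]]. simpl in *.
  assert (fz : f z = 0) by (apply (mult_ge_root f z (pred m)); replace (S (pred m)) with m by lia; auto).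
  apply Hf0. rewrite <- fz. apply (deriv_pos_zero_const f g); auto.
Qed.

Lemma zeros_at_most_chain : forall L (f : nat -> R -> R) B,
  (forall i, (i < L)%nat -> exists g w, deriv_pos (f i) g /\ pos_rat w /\ (forall x, 0 < x -> w x <> 0) /\
        forall x, 0 < x -> f (S i) x = w x * g x) ->
  not_identically_zero (f 0%nat) -> (not_identically_zero (f L) -> zeros_at_most (f L) B) -> zeros_at_most (f 0%nat) (L + B).
Proof.
  induction L; intros f B Hs Hn HL. simpl; auto.
  destruct (Hs 0%nat ltac:(lia)) as [g [w [Hd [Hw [Hw0 He]]]]].
  destruct (classic (not_identically_zero (f 1%nat))) as [N1|N1].
  - assert (Z1 : zeros_at_most (f 1%nat) (L + B)).
    { apply (IHL (fun i => f (S i))); auto.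
      intros i Hi. apply Hs. lia. }
    intros l Hl. destruct (rolle_zero_family _ _ _ Hd Hl) as [l' [Hl' Hs']].
    assert (zeros_at_most g (L + B)).
    { apply zeros_at_most_mul with (f 1%nat) w; auto. }
    specialize (H l' Hl'). unfold total_mult in *. lia.
  - assert (forall x, 0 < x -> g x = 0).
    { intros x Hx. destruct (Req_dec (g x) 0); auto. exfalso. apply N1. exists x. split; [exact Hx|].
      rewrite He; auto. }
    intros l Hl. assert (H1 := zeros_at_most_const _ _ Hd H Hn l Hl). lia.
Qed.

(* Zeros of even polynomials: u |-> p(u^2) has at most deg p zeros on
   (0,+oo), since d/du p(u^2) = 2u p'(u^2). *)
Lemma peval_sq_deriv : forall q x, derivable_pt_lim (fun u => peval q (u * u)) x (peval (pder q) (x * x) * (1 * x + x * 1)).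
Proof.
  intros q x. apply (derivable_pt_lim_comp (fun u => u * u) (peval q)).
  apply (derivable_pt_lim_mult id id); apply derivable_pt_lim_id. apply peval_pder.
Qed.

Lemma deriv_pos_const : forall f c, (forall x, 0 < x -> f x = c) -> deriv_pos f (fun _ => 0).
Proof.
  intros f c H x Hx. apply derivable_pt_lim_ext_pos with (fun _ => c); auto.
  intros; symmetry; auto. apply derivable_pt_lim_const.
Qed.

(* Each differentiation of p lowers its length by one, and after length p - 1
   steps the function is a nonzero constant. *)
Lemma even_poly_zeros : forall p, not_identically_zero (fun u => peval p (u * u)) ->
  zeros_at_most (fun u => peval p (u * u)) (length p - 1).
Proof.
  intros p Hn. replace (length p - 1)%nat with ((length p - 1) + 0)%nat by lia.
  apply (zeros_at_most_chain (length p - 1) (fun i u => peval (Nat.iter i pder p) (u * u)) 0); auto.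
  - intros i Hi. exists (fun u => peval (pder (Nat.iter i pder p)) (u * u) * (1 * u + u * 1)), (fun x => / (2 * x)).
    split; [|split; [|split]].
    + intros x Hx. apply peval_sq_deriv.
    + apply pos_rat_inv2x.
    + intros x Hx. apply Rinv_neq_0_compat. lra.
    + intros x Hx. simpl. field. lra.
  - intros Hn'. apply zeros_at_most_const with (fun _ => 0); auto.
    apply deriv_pos_const with (peval (Nat.iter (length p - 1) pder p) 0).
    intros x Hx. apply peval_short. pose proof (len_iter_pder (length p - 1) p). lia.
Qed.

Lemma is_RInt_plus_R : forall (f g : R -> R) a b (u v : R), is_RInt f a b u -> is_RInt g a b v ->
  is_RInt (fun x => f x + g x) a b (u + v).
Proof. intros. apply (is_RInt_plus f g a b u v); auto. Qed.

Lemma is_RInt_scal_R : forall (f : R -> R) a b c (v : R), is_RInt f a b v -> is_RInt (fun x => c * f x) a b (c * v).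
Proof. intros. apply (is_RInt_scal f a b c v); auto. Qed.

Lemma is_RInt_ext_R : forall (f g : R -> R) a b (v w : R), (forall x, f x = g x) -> v = w -> is_RInt f a b v -> is_RInt g a b w.
Proof. intros. subst. apply is_RInt_ext with f; auto. Qed.

Lemma is_RInt_const_R : forall a b (c : R), is_RInt (fun _ => c) a b (c * (b - a)).
Proof. intros. eapply is_RInt_ext_R; [| |apply (is_RInt_const a b c)]; intros; simpl; auto. unfold scal; simpl; unfold mult; simpl; ring. Qed.

Lemma is_RInt_primitive : forall (F f : R -> R) a b, (forall x, derivable_pt_lim F x (f x)) ->
  (forall x, continuous f x) -> is_RInt f a b (F b - F a).
Proof.
  intros F f a b H Hc. apply (is_RInt_derive F f a b).
  - intros. apply is_derive_Reals. auto.
  - intros. auto.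
Qed.

Lemma Rint_is_RInt : forall (f : R -> R) a b (V : R), is_RInt f a b V -> Rint f a b = V.
Proof.
  intros f a b V H. unfold Rint.
  destruct (excluded_middle_informative (exists _ : Riemann_integrable f a b, True)) as [E|E].
  - rewrite <- RInt_Reals. apply is_RInt_unique. auto.
  - exfalso. apply E. exists (ex_RInt_Reals_0 f a b (ex_intro _ V H)). auto.
Qed.

Definition trig_mono (a b : nat) (t : R) := sin t ^ a * cos t ^ b.

Lemma derivable_pt_lim_pow_comp : forall f l x n, derivable_pt_lim f x l ->
  derivable_pt_lim (fun y => f y ^ n) x (INR n * f x ^ pred n * l).
Proof.
  intros. apply (derivable_pt_lim_comp f (fun y => y ^ n)); auto. apply derivable_pt_lim_pow.
Qed.

Lemma trig_mono_derivable : forall p q x, derivable_pt_lim (trig_mono p q) x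
  (INR p * sin x ^ pred p * cos x * cos x ^ q + sin x ^ p * (INR q * cos x ^ pred q * - sin x)).
Proof.
  intros. unfold trig_mono. apply (derivable_pt_lim_mult (fun y => sin y ^ p) (fun y => cos y ^ q)).
  apply derivable_pt_lim_pow_comp. apply derivable_pt_lim_sin. apply derivable_pt_lim_pow_comp. apply derivable_pt_lim_cos.
Qed.

Inductive trig_term := TrigTerm (c : R) (p q : nat).

Fixpoint trig_eval (F : list trig_term) (t : R) : R :=
  match F with nil => 0 | TrigTerm c p q :: F' => c * trig_mono p q t + trig_eval F' t end.

Definition trig_scale (c : R) (F : list trig_term) := map (fun t => match t with TrigTerm d p q => TrigTerm (c * d) p q end) F.

Lemma trig_eval_scale : forall c F t, trig_eval (trig_scale c F) t = c * trig_eval F t.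
Proof. induction F as [|[d p q] F IH]; simpl; intros; [ring|rewrite IH; ring]. Qed.

Definition trig_parity (k : nat) (F : list trig_term) :=
  List.Forall (fun t => match t with TrigTerm c p q => (p + q <= k)%nat /\ Nat.even (p + q) = Nat.even k end) F.

Definition trig_mono_der (p q : nat) (x : R) :=
  INR p * sin x ^ pred p * cos x * cos x ^ q + sin x ^ p * (INR q * cos x ^ pred q * - sin x).

Fixpoint trig_eval_der (F : list trig_term) (t : R) : R :=
  match F with nil => 0 | TrigTerm c p q :: F' => c * trig_mono_der p q t + trig_eval_der F' t end.

(* The derivative of a trigonometric polynomial is continuous, so it is the
   integrand of its own primitive. *)
Lemma trig_eval_derivable : forall F x, derivable_pt_lim (trig_eval F) x (trig_eval_der F x).
Proof.
  induction F as [|[c p q] F IH]; intros x; simpl.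
  - apply derivable_pt_lim_const.
  - apply (derivable_pt_lim_plus (fun t => c * trig_mono p q t) (trig_eval F)); auto.
    apply derivable_pt_lim_scal. apply trig_mono_derivable.
Qed.

Lemma trig_mono_der_cont : forall p q x, continuous (trig_mono_der p q) x.
Proof.
  intros p q x. apply (ex_derive_continuous (K:=R_AbsRing) (V:=R_NormedModule)).
  unfold trig_mono_der. auto_derive. auto.
Qed.

Lemma trig_eval_der_cont : forall F x, continuous (trig_eval_der F) x.
Proof.
  induction F as [|[c p q] F IH]; intros x; simpl.
  - apply continuous_const.
  - apply (continuous_plus (fun t => c * trig_mono_der p q t) (trig_eval_der F)); auto.
    apply (continuous_mult (fun _ => c) (trig_mono_der p q)).
    + apply continuous_const.
    + apply trig_mono_der_cont.
Qed.

Lemma is_RInt_trig_eval_der : forall F al be, is_RInt (trig_eval_der F) al be (trig_eval F be - trig_eval F al).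
Proof. intros. apply is_RInt_primitive. apply trig_eval_derivable. apply trig_eval_der_cont. Qed.

Lemma trig_parity_scale : forall k k' c F, trig_parity k F -> (k <= k')%nat -> Nat.even k = Nat.even k' ->
  trig_parity k' (trig_scale c F).
Proof.
  intros k k' c F H Hk He. unfold trig_parity, trig_scale in *. rewrite List.Forall_map.
  eapply List.Forall_impl; [|exact H]. intros [d p q] [A B]. split. lia. congruence.
Qed.

Lemma odd_SS : forall n, Nat.odd (S (S n)) = Nat.odd n.
Proof. reflexivity. Qed.

Definition trig_primitive (a b : nat) (lam : R) (F : list trig_term) :=
  (Nat.odd (a + b) = true -> lam = 0) /\ trig_parity (a + b) F /\
  forall al be, is_RInt (trig_mono a b) al be (trig_eval F be - trig_eval F al + lam * (be - al)).

(* Reduction formula in cos: sin^a cos^(b+2) = d/dt [sin^(a+1) cos^(b+1)] / (a+b+2)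
   + (b+1)/(a+b+2) sin^a cos^b, using sin^2 = 1 - cos^2. *)
Lemma primitive_cos_step : forall a b' lam' F', trig_primitive a b' lam' F' ->
  exists lam F, trig_primitive a (S (S b')) lam F.
Proof.
  intros a b' lam' F' [Ho [HF HI]].
  set (k := INR a + INR b' + 2).
  assert (Hk : k <> 0) by (unfold k; pose proof (pos_INR a); pose proof (pos_INR b'); lra).
  exists ((INR b' + 1) / k * lam'), (TrigTerm (1 / k) (S a) (S b') :: trig_scale ((INR b' + 1) / k) F').
  unfold trig_primitive. split; [|split].
  - intros H. replace (a + S (S b'))%nat with (S (S (a + b'))) in H by lia. rewrite odd_SS in H.
    rewrite Ho; auto; ring.
  - constructor. simpl. split. lia. replace (a + S (S b'))%nat with (S a + S b')%nat by lia. auto.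
    apply trig_parity_scale with (a + b')%nat; auto. lia. replace (a + S (S b'))%nat with (S (S (a + b'))) by lia. auto.
  - intros al be.
    eapply is_RInt_ext_R; [| |apply (is_RInt_plus_R _ _ al be _ _ (is_RInt_scal_R _ al be (1 / k) _ (is_RInt_trig_eval_der (TrigTerm 1 (S a) (S b') :: nil) al be))
                                     (is_RInt_scal_R _ al be ((INR b' + 1) / k) _ (HI al be)))].
    + intros x. cbn [trig_eval_der]. unfold trig_mono_der, trig_mono.
      replace (sin x ^ S a * (INR (S b') * cos x ^ pred (S b') * - sin x))
        with (- (sin x * sin x) * sin x ^ a * (INR (S b') * cos x ^ b')) by (simpl; ring).
      replace (sin x * sin x) with (1 - cos x * cos x) by (pose proof (sin2_cos2 x); unfold Rsqr in *; lra).
      rewrite !S_INR. cbn [pow pred]. unfold k. field. auto.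
    + simpl. rewrite !trig_eval_scale. field. auto.
Qed.

(* Reduction formula in sin: sin^(a+2) cos^b = - d/dt [sin^(a+1) cos^(b+1)] / (a+b+2)
   + (a+1)/(a+b+2) sin^a cos^b, using cos^2 = 1 - sin^2. *)
Lemma primitive_sin_step : forall a' b lam' F', trig_primitive a' b lam' F' ->
  exists lam F, trig_primitive (S (S a')) b lam F.
Proof.
  intros a' b lam' F' [Ho [HF HI]].
  set (k := INR a' + INR b + 2).
  assert (Hk : k <> 0) by (unfold k; pose proof (pos_INR a'); pose proof (pos_INR b); lra).
  exists ((INR a' + 1) / k * lam'), (TrigTerm (- 1 / k) (S a') (S b) :: trig_scale ((INR a' + 1) / k) F').
  unfold trig_primitive. split; [|split].
  - intros H. simpl in H. rewrite odd_SS in H. rewrite Ho; auto; ring.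
  - constructor. split; [lia|]. replace (S (S a') + b)%nat with (S a' + S b)%nat by lia; reflexivity.
    apply trig_parity_scale with (a' + b)%nat; auto. lia.
  - intros al be.
    eapply is_RInt_ext_R; [| |apply (is_RInt_plus_R _ _ al be _ _ (is_RInt_scal_R _ al be (- 1 / k) _ (is_RInt_trig_eval_der (TrigTerm 1 (S a') (S b) :: nil) al be))
                                     (is_RInt_scal_R _ al be ((INR a' + 1) / k) _ (HI al be)))].
    + intros x. cbn [trig_eval_der]. unfold trig_mono_der, trig_mono.
      replace (INR (S a') * sin x ^ pred (S a') * cos x * cos x ^ S b)
        with (INR (S a') * sin x ^ a' * (cos x * cos x) * cos x ^ b) by (simpl; ring).
      replace (cos x * cos x) with (1 - sin x * sin x) by (pose proof (sin2_cos2 x); unfold Rsqr in *; lra).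
      rewrite !S_INR. cbn [pow pred]. unfold k. field. auto.
    + simpl. rewrite !trig_eval_scale. field. auto.
Qed.

Lemma trig_mono_primitive : forall N a b, (a + b <= N)%nat -> exists lam F, trig_primitive a b lam F.
Proof.
  induction N; intros a b Hab; unfold trig_primitive.
  - assert (a = 0%nat) by lia; assert (b = 0%nat) by lia; subst.
    exists 1, nil. split; [intros H; discriminate|split; [constructor|]].
    intros. simpl. eapply is_RInt_ext_R; [| |apply (is_RInt_const_R al be 1)]. intros; unfold trig_mono; simpl; ring. ring.
  - destruct b as [|[|b']].
    + destruct a as [|[|a']].
      * apply IHN. lia.
      * exists 0, (TrigTerm (-1) 0 1 :: nil). split; [auto|split].
        constructor; [simpl; split; [lia|reflexivity]|constructor].
        intros. eapply is_RInt_ext_R; [| |apply (is_RInt_trig_eval_der (TrigTerm (-1) 0 1 :: nil))].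
        intros x; simpl; unfold trig_mono_der, trig_mono; simpl; ring. simpl; ring.
      * destruct (IHN a' 0%nat ltac:(lia)) as [lam' [F' H]].
        apply (primitive_sin_step a' 0 lam' F'); auto.
    + destruct a as [|[|a']].
      * exists 0, (TrigTerm 1 1 0 :: nil). split; [auto|split].
        constructor; [simpl; split; [lia|reflexivity]|constructor].
        intros. eapply is_RInt_ext_R; [| |apply (is_RInt_trig_eval_der (TrigTerm 1 1 0 :: nil))].
        intros x; simpl; unfold trig_mono_der, trig_mono; simpl; ring. simpl; ring.
      * exists 0, (TrigTerm (1/2) 2 0 :: nil). split; [auto|split].
        constructor; [simpl; split; [lia|reflexivity]|constructor].
        intros. eapply is_RInt_ext_R; [| |apply (is_RInt_trig_eval_der (TrigTerm (1/2) 2 0 :: nil))].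
        intros x; simpl; unfold trig_mono_der, trig_mono; simpl; field. simpl; ring.
      * destruct (IHN a' 1%nat ltac:(lia)) as [lam' [F' H]].
        apply (primitive_sin_step a' 1 lam' F'); auto.
    + destruct (IHN a b' ltac:(lia)) as [lam' [F' H]].
      apply (primitive_cos_step a b' lam' F'); auto.
Qed.

Lemma pow_minus_one : forall m, (-1) ^ m = if Nat.even m then 1 else -1.
Proof.
  induction m. simpl; auto. rewrite Nat.even_succ, <- Nat.negb_even. simpl pow. rewrite IHm.
  destruct (Nat.even m); simpl; ring.
Qed.

Lemma pow_neg : forall x p, (- x) ^ p = (-1) ^ p * x ^ p.
Proof. induction p; simpl; [ring| rewrite IHp; ring]. Qed.

Lemma trig_mono_2PI : forall p q t, trig_mono p q (t + 2 * PI) = trig_mono p q t.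
Proof.
  intros. unfold trig_mono. rewrite sin_plus, cos_plus, sin_2PI, cos_2PI.
  replace (sin t * 1 + cos t * 0) with (sin t) by ring.
  replace (cos t * 1 - sin t * 0) with (cos t) by ring. auto.
Qed.

Lemma trig_mono_PI : forall p q t, trig_mono p q (t + PI) = (-1) ^ (p + q) * trig_mono p q t.
Proof. intros. unfold trig_mono. rewrite neg_sin, neg_cos, !pow_neg, pow_add. ring. Qed.

Lemma trig_mono_opp : forall p q t, trig_mono p q (- t) = (-1) ^ p * trig_mono p q t.
Proof. intros. unfold trig_mono. rewrite sin_neg, cos_neg, pow_neg. ring. Qed.

Lemma trig_eval_2PI : forall F t, trig_eval F (t + 2 * PI) = trig_eval F t.
Proof. induction F as [|[c p q] F IH]; simpl; intros; auto. rewrite trig_mono_2PI, IH. auto. Qed.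

Lemma trig_eval_PI : forall k F t, trig_parity k F -> trig_eval F (t + PI) = (-1) ^ k * trig_eval F t.
Proof.
  induction F as [|[c p q] F IH]; simpl; intros t H. ring.
  inversion H; subst. destruct H2 as [_ He].
  rewrite IH; auto. rewrite trig_mono_PI, !pow_minus_one, He. ring.
Qed.

(* For u > 0 the
   point (u, u^2) lies on the circle of radius [radius u] = sqrt h at angle
   [tau u] = atan (1/u) from the y-axis, and [u_of] inverts h. *)
Definition hpoly : list R := 0 :: 0 :: 1 :: 0 :: 1 :: nil.

Lemma peval_hpoly : forall u, peval hpoly u = u * u + (u * u) * (u * u).
Proof. intros; unfold hpoly; simpl; ring. Qed.

Lemma hpoly_pos : forall u, 0 < u -> 0 < peval hpoly u.
Proof. intros. rewrite peval_hpoly. nra. Qed.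

Definition radius (u : R) := sqrt (peval hpoly u).

Definition tau (u : R) := atan (/ u).

Lemma radius_pos : forall u, 0 < u -> 0 < radius u.
Proof. intros. unfold radius. apply sqrt_lt_R0. apply hpoly_pos; auto. Qed.

Lemma radius_sq : forall u, 0 < u -> radius u * radius u = peval hpoly u.
Proof. intros. unfold radius. apply sqrt_sqrt. left; apply hpoly_pos; auto. Qed.

Lemma radius_eq : forall u, 0 < u -> radius u = u * u * sqrt (1 + (/ u)²).
Proof.
  intros u Hu. assert (A := sqrt_lt_R0 (1 + (/u)²) ltac:(unfold Rsqr; nra)).
  assert (A2 := sqrt_sqrt (1 + (/u)²) ltac:(unfold Rsqr; nra)).
  assert (R2 := radius_sq u Hu). assert (Rp := radius_pos u Hu).
  set (a := sqrt (1 + (/u)²)) in *. set (r := radius u) in *.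
  rewrite peval_hpoly in R2.
  assert (r * r = (u * u * a) * (u * u * a)).
  { replace ((u * u * a) * (u * u * a)) with ((u*u)*(u*u)*(a*a)) by ring. rewrite A2.
    unfold Rsqr. rewrite R2. field. lra. }
  assert (0 < u * u * a) by (apply Rmult_lt_0_compat; nra).
  nra.
Qed.

Lemma radius_sin : forall u, 0 < u -> radius u * sin (tau u) = u.
Proof.
  intros u Hu. unfold tau. rewrite sin_atan, radius_eq; auto.
  assert (A := sqrt_lt_R0 (1 + (/u)²) ltac:(unfold Rsqr; nra)). field. lra.
Qed.

Lemma radius_cos : forall u, 0 < u -> radius u * cos (tau u) = u * u.
Proof.
  intros u Hu. unfold tau. rewrite cos_atan, radius_eq; auto.
  assert (A := sqrt_lt_R0 (1 + (/u)²) ltac:(unfold Rsqr; nra)). field. lra.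
Qed.

Lemma u_of_hpoly : forall u, 0 < u -> u_of (peval hpoly u) = u.
Proof.
  intros u Hu. unfold u_of. rewrite peval_hpoly.
  replace (1 + 4 * (u * u + u * u * (u * u))) with ((2 * (u * u) + 1) * (2 * (u * u) + 1)) by ring.
  rewrite sqrt_square by nra.
  replace ((2 * (u * u) + 1 - 1) / 2) with (u * u) by field.
  apply sqrt_square. lra.
Qed.

Lemma u_of_pos : forall h, 0 < h -> 0 < u_of h.
Proof.
  intros h Hh. unfold u_of. apply sqrt_lt_R0.
  assert (1 < sqrt (1 + 4 * h)).
  { rewrite <- sqrt_1 at 1. apply sqrt_lt_1; lra. }
  lra.
Qed.

Lemma hpoly_u_of : forall h, 0 < h -> peval hpoly (u_of h) = h.
Proof.
  intros h Hh. rewrite peval_hpoly. unfold u_of.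
  assert (1 < sqrt (1 + 4 * h)) by (rewrite <- sqrt_1 at 1; apply sqrt_lt_1; lra).
  rewrite sqrt_sqrt by lra.
  assert (S := sqrt_sqrt (1 + 4 * h) ltac:(lra)).
  set (s := sqrt (1 + 4 * h)) in *. nra.
Qed.

Definition hpoly_sq : list R := 0 :: 1 :: 1 :: nil.

Lemma peval_hpoly_sq : forall u, peval hpoly_sq (u * u) = peval hpoly u.
Proof. intros; rewrite peval_hpoly; unfold hpoly_sq; simpl; ring. Qed.

Lemma len_ppow_hpoly_sq : forall j, (1 <= length (ppow hpoly_sq j) <= 2 * j + 1)%nat.
Proof.
  induction j; simpl. lia.
  assert (H := len_pmul hpoly_sq (ppow hpoly_sq j)).
  specialize (H ltac:(lia)).
  assert (length (pmul hpoly_sq (ppow hpoly_sq j)) >= length (ppow hpoly_sq j))%nat.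
  { unfold hpoly_sq. cbn [pmul]. rewrite len_padd, len_pscale. lia. }
  unfold hpoly_sq in *; simpl in *. lia.
Qed.

Lemma len_pcomp_hpoly_sq : forall p, (length (pcomp p hpoly_sq) <= 2 * length p - 1)%nat.
Proof.
  induction p. simpl; lia. destruct p as [|b p'].
  - simpl. lia.
  - cbn [pcomp]. rewrite len_padd. fold (pcomp (b :: p') hpoly_sq).
    assert (H := len_pmul (pcomp (b :: p') hpoly_sq) hpoly_sq ltac:(unfold hpoly_sq; simpl; lia)).
    unfold hpoly_sq in *; simpl length in *. lia.
Qed.

(* Transport of zeros along h = u^2 + u^4.  Since h is an increasing bijection
   of (0,+oo) with positive derivative, M and M o h have the same number of
   zeros counted with multiplicity. *)
Lemma nodup_map_inj : forall (f : R -> R) l, (forall x y, In x l -> In y l -> f x = f y -> x = y) ->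
  NoDup l -> NoDup (map f l).
Proof.
  induction l; intros Hi Hn; simpl. constructor. inversion Hn; subst. constructor.
  - intro Hin. apply in_map_iff in Hin. destruct Hin as [y [Hy Hiny]].
    assert (y = a) by (apply Hi; simpl; auto). subst. auto.
  - apply IHl; auto. intros; apply Hi; simpl; auto.
Qed.

Lemma zeros_at_most_reparam : forall (M V : R -> R) N, (forall u, 0 < u -> M (peval hpoly u) = V u) ->
  zeros_at_most V N -> zeros_at_most M N.
Proof.
  intros M V N E H l [Hn Hf].
  set (l' := map (fun p => (u_of (fst p), snd p)) l).
  assert (Hs : map snd l' = map snd l).
  { unfold l'. rewrite map_map. simpl. auto. }
  rewrite <- Hs. apply H. split.
  - unfold l'. rewrite map_map. simpl. rewrite <- (map_map fst u_of).
    apply nodup_map_inj; auto. intros x y Hx Hy Hxy.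
    apply in_map_iff in Hx. destruct Hx as [[hx mx] [Ex Ix]]. simpl in Ex; subst x.
    apply in_map_iff in Hy. destruct Hy as [[hy my] [Ey Iy]]. simpl in Ey; subst y.
    rewrite Forall_forall in Hf. destruct (Hf _ Ix) as [Px _]. destruct (Hf _ Iy) as [Py _]. simpl in *.
    rewrite <- (hpoly_u_of hx), <- (hpoly_u_of hy), Hxy; auto.
  - unfold l'. rewrite Forall_map. eapply Forall_impl; [|exact Hf].
    intros [h m] [A [B C]]. simpl in *. split; [apply u_of_pos; auto|split; auto].
    apply mult_ge_ext with (fun x => M (peval hpoly x)). apply u_of_pos; auto. auto.
    apply mult_ge_comp. apply u_of_pos; auto. apply hpoly_pos. rewrite hpoly_u_of; auto.
Qed.

Lemma nonzero_reparam : forall (M V : R -> R), (forall u, 0 < u -> M (peval hpoly u) = V u) ->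
  not_identically_zero M -> not_identically_zero V.
Proof.
  intros M V E [h [Hh Hm]]. exists (u_of h). split. apply u_of_pos; auto.
  rewrite <- E by (apply u_of_pos; auto). rewrite hpoly_u_of; auto.
Qed.

(* If
   deg(sin^p cos^q) has the parity of k, then r^k (sin^p cos^q (tau) -
   sin^p cos^q (-tau)) equals u S(u^2) with deg S < k: it vanishes for p even,
   and for p odd it is 2 u^p u^(2q) h^j. *)
Lemma even_diff : forall a b, (a <= b)%nat -> Nat.even a = Nat.even b -> exists j, b = (a + 2 * j)%nat.
Proof.
  intros a b Hab He. destruct (Nat.Even_or_Odd (b - a)) as [[j Hj]|[j Hj]].
  - exists j. lia.
  - exfalso. replace b with (a + (2 * j + 1))%nat in He by lia.
    rewrite Nat.even_add, Nat.even_odd in He. destruct (Nat.even a); discriminate.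
Qed.

Lemma odd_part_mono : forall k c p q, (p + q <= k)%nat -> Nat.even (p + q) = Nat.even k ->
  exists S, (length S <= k)%nat /\ forall u, 0 < u ->
    radius u ^ k * (c * trig_mono p q (tau u) - c * trig_mono p q (- tau u)) = u * peval S (u * u).
Proof.
  intros k c p q H1 H2. destruct (even_diff _ _ H1 H2) as [j Hj].
  destruct (Nat.Even_or_Odd p) as [[t Ht]|[t Ht]].
  - exists nil. split. simpl; lia. intros u Hu. rewrite trig_mono_opp, pow_minus_one.
    replace (Nat.even p) with true by (subst; rewrite Nat.even_mul; reflexivity). simpl. ring.
  - exists (pscale (2 * c) (pmul (mono (t + q)) (ppow hpoly_sq j))). split.
    + rewrite len_pscale. assert (A := len_pmul (mono (t + q)) (ppow hpoly_sq j)).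
      assert (B := len_ppow_hpoly_sq j). rewrite len_mono in A.
      specialize (A ltac:(lia)). lia.
    + intros u Hu. rewrite trig_mono_opp, pow_minus_one.
      replace (Nat.even p) with false by (subst; rewrite Nat.even_odd; reflexivity).
      rewrite peval_pscale, peval_pmul, peval_mono, peval_ppow, peval_hpoly_sq.
      rewrite <- (radius_sq u Hu). rewrite Hj. unfold trig_mono.
      rewrite !pow_add.
      replace (radius u ^ (2 * j)) with ((radius u * radius u) ^ j) by (rewrite pow_mult; simpl; f_equal; ring).
      replace (radius u ^ p * radius u ^ q * (radius u * radius u) ^ j * (c * (sin (tau u) ^ p * cos (tau u) ^ q) -
        c * (-1 * (sin (tau u) ^ p * cos (tau u) ^ q))))
        with (2 * c * ((radius u * sin (tau u)) ^ p * (radius u * cos (tau u)) ^ q * (radius u * radius u) ^ j))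
        by (rewrite !Rpow_mult_distr; ring).
      rewrite radius_sin, radius_cos by auto. rewrite Ht, pow_add, pow_mult. replace (u ^ 2) with (u * u) by ring. ring.
Qed.

Lemma odd_part_trig : forall k F, trig_parity k F -> exists S, (length S <= k)%nat /\ forall u, 0 < u ->
  radius u ^ k * (trig_eval F (tau u) - trig_eval F (- tau u)) = u * peval S (u * u).
Proof.
  induction F as [|[c p q] F IH]; intros H.
  - exists nil. split. simpl; lia. intros; simpl; ring.
  - inversion H; subst. destruct H2 as [A B]. destruct (IH H3) as [S1 [L1 E1]].
    destruct (odd_part_mono k c p q A B) as [S2 [L2 E2]].
    exists (padd S2 S1). split. rewrite len_padd. lia.
    intros u Hu. rewrite peval_padd. simpl.
    replace (u * (peval S2 (u*u) + peval S1 (u*u))) with (u * peval S2 (u*u) + u * peval S1 (u*u)) by ring.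
    rewrite <- (E1 u Hu), <- (E2 u Hu). ring.
Qed.

Definition half_up (n : nat) := ((n + 1) / 2)%nat.

Lemma half_up_bound : forall n m, (2 * m <= n + 1)%nat -> (m <= half_up n)%nat.
Proof.
  intros n m H. unfold half_up. pose proof (Nat.div_mod (n + 1) 2 ltac:(lia)).
  pose proof (Nat.mod_upper_bound (n + 1) 2 ltac:(lia)). lia.
Qed.

Definition normal_form (n : nat) (V : R -> R) := exists S C Q,
  (length S <= n + 1)%nat /\ (length C <= half_up n)%nat /\ (length Q <= half_up n)%nat /\
  forall u, 0 < u -> V u = u * peval S (u * u) + peval hpoly u * peval C (peval hpoly u) + peval hpoly u * peval Q (peval hpoly u) * tau u.

Lemma normal_form_plus : forall n V W, normal_form n V -> normal_form n W -> normal_form n (fun u => V u + W u).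
Proof.
  intros n V W [S1 [C1 [Q1 [A1 [B1 [D1 E1]]]]]] [S2 [C2 [Q2 [A2 [B2 [D2 E2]]]]]].
  exists (padd S1 S2), (padd C1 C2), (padd Q1 Q2). rewrite !len_padd.
  repeat split; try lia. intros u Hu. rewrite E1, E2, !peval_padd by auto. ring.
Qed.

Lemma normal_form_scal : forall n c V, normal_form n V -> normal_form n (fun u => c * V u).
Proof.
  intros n c V [S1 [C1 [Q1 [A1 [B1 [D1 E1]]]]]].
  exists (pscale c S1), (pscale c C1), (pscale c Q1). rewrite !len_pscale.
  repeat split; try lia. intros u Hu. rewrite E1, !peval_pscale by auto. ring.
Qed.

Definition integral_normal (n : nat) (al be : R -> R) (P : R -> R -> R) :=
  exists V, (forall u, 0 < u -> is_RInt (P u) (al u) (be u) (V u)) /\ normal_form n V.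

Lemma integral_normal_plus : forall n al be P1 P2, integral_normal n al be P1 -> integral_normal n al be P2 ->
  integral_normal n al be (fun u t => P1 u t + P2 u t).
Proof.
  intros n al be P1 P2 [V1 [H1 G1]] [V2 [H2 G2]]. exists (fun u => V1 u + V2 u). split.
  intros u Hu. apply is_RInt_plus_R; auto. apply normal_form_plus; auto.
Qed.

Lemma integral_normal_scal : forall n al be c P, integral_normal n al be P -> integral_normal n al be (fun u t => c * P u t).
Proof.
  intros n al be c P [V [H G]]. exists (fun u => c * V u). split.
  intros u Hu. apply is_RInt_scal_R; auto. apply normal_form_scal; auto.
Qed.

Lemma integral_normal_ext : forall n al be P1 P2, integral_normal n al be P1 -> (forall u t, 0 < u -> P1 u t = P2 u t) ->
  integral_normal n al be P2.
Proof.
  intros n al be P1 P2 [V [H G]] E. exists V. split; auto.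
  intros u Hu. eapply is_RInt_ext_R; [| |apply (H u Hu)]; auto.
Qed.

Lemma integral_normal_sum : forall n al be (P : nat -> R -> R -> R) N,
  (forall i, (i <= N)%nat -> integral_normal n al be (P i)) ->
  integral_normal n al be (fun u t => sum_f_R0 (fun i => P i u t) N).
Proof.
  induction N; intros H. simpl. apply H; lia.
  simpl. apply (integral_normal_plus n al be (fun u t => sum_f_R0 (fun i => P i u t) N) (P (S N))).
  apply IHN. intros; apply H; lia. apply H; lia.
Qed.

(* The parameter intervals of the four arcs (see [melnikov]): the first
   component is the arc of (f1,g1), [false] the arc of (f2,g2). *)
Definition arc_bounds (c : curve) (pc : bool) (u : R) : R * R :=
  match c, pc with
  | ParabolaUp, true => (tau u, 2 * PI - tau u)
  | ParabolaUp, false => (2 * PI - tau u, 2 * PI + tau u)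
  | ParabolaDown, true => (PI + tau u, 3 * PI - tau u)
  | ParabolaDown, false => (PI - tau u, PI + tau u)
  end.

(* On each arc, F(end) - F(start) + lam (end - start) reduces, by periodicity
   and the pi-shift, to +-(F(tau) - F(-tau)) + lam (A + B tau). *)
Lemma arc_value : forall k lam F c pc, trig_parity k F -> exists sg A B, forall u,
  trig_eval F (snd (arc_bounds c pc u)) - trig_eval F (fst (arc_bounds c pc u)) + lam * (snd (arc_bounds c pc u) - fst (arc_bounds c pc u))
  = sg * (trig_eval F (tau u) - trig_eval F (- tau u)) + lam * (A + B * tau u).
Proof.
  intros k lam F c pc HF. destruct c, pc; simpl.
  - exists (-1), (2 * PI), (-2). intros u.
    replace (2 * PI - tau u) with (- tau u + 2 * PI) by ring. rewrite trig_eval_2PI. ring.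
  - exists 1, 0, 2. intros u.
    replace (2 * PI - tau u) with (- tau u + 2 * PI) by ring.
    replace (2 * PI + tau u) with (tau u + 2 * PI) by ring. rewrite !trig_eval_2PI. ring.
  - exists (- (-1) ^ k), (2 * PI), (-2). intros u.
    replace (3 * PI - tau u) with ((- tau u + PI) + 2 * PI) by ring.
    replace (PI + tau u) with (tau u + PI) by ring. rewrite trig_eval_2PI, !(trig_eval_PI k) by auto. ring.
  - exists ((-1) ^ k), 0, 2. intros u.
    replace (PI - tau u) with (- tau u + PI) by ring.
    replace (PI + tau u) with (tau u + PI) by ring. rewrite !(trig_eval_PI k) by auto. ring.
Qed.

(* The integral of r^(a+b) sin^a cos^b over an arc has the normal form: the
   odd part gives u S(u^2), and for a + b = 2m the linear term lam t gives
   h^m (A + B tau) with m <= K. *)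
Lemma integral_normal_mono : forall n c pc a b, (1 <= a + b <= n + 1)%nat ->
  integral_normal n (fun u => fst (arc_bounds c pc u)) (fun u => snd (arc_bounds c pc u)) (fun u t => radius u ^ (a + b) * trig_mono a b t).
Proof.
  intros n c pc a b Hk.
  destruct (trig_mono_primitive (a + b) a b ltac:(lia)) as [lam [F [Ho [HF HI]]]].
  destruct (arc_value (a + b) lam F c pc HF) as [sg [A [B Hv]]].
  destruct (odd_part_trig (a + b) F HF) as [Sl [HS ES]].
  set (k := (a + b)%nat) in *.
  exists (fun u => radius u ^ k * (trig_eval F (snd (arc_bounds c pc u)) - trig_eval F (fst (arc_bounds c pc u))
                   + lam * (snd (arc_bounds c pc u) - fst (arc_bounds c pc u)))).
  split.
  - intros u Hu. apply is_RInt_scal_R. apply HI.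
  - destruct (Nat.Even_or_Odd k) as [[m Hm]|Hodd].
    + assert (1 <= m)%nat by lia.
      exists (pscale sg Sl), (pscale (lam * A) (mono (m - 1))), (pscale (lam * B) (mono (m - 1))).
      rewrite !len_pscale, !len_mono. repeat split; try lia.
      1,2: apply half_up_bound; lia.
      intros u Hu. rewrite Hv, !peval_pscale, !peval_mono.
      rewrite Rmult_plus_distr_l.
      replace (radius u ^ k * (sg * (trig_eval F (tau u) - trig_eval F (- tau u)))) with (sg * (radius u ^ k * (trig_eval F (tau u) - trig_eval F (- tau u)))) by ring.
      rewrite ES by auto.
      assert (E : radius u ^ k = peval hpoly u * peval hpoly u ^ (m - 1)%nat).
      { rewrite Hm, pow_mult. replace (radius u ^ 2) with (peval hpoly u) by (rewrite <- radius_sq by auto; ring).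
        replace m with (S (m - 1))%nat at 1 by lia. simpl. ring. }
      rewrite E. ring.
    + assert (lam = 0) by (apply Ho; apply Nat.odd_spec; auto). subst lam.
      exists (pscale sg Sl), nil, nil. rewrite !len_pscale. repeat split; simpl; try lia.
      intros u Hu. rewrite Hv, peval_pscale. rewrite Rmult_plus_distr_l.
      replace (radius u ^ k * (sg * (trig_eval F (tau u) - trig_eval F (- tau u)))) with (sg * (radius u ^ k * (trig_eval F (tau u) - trig_eval F (- tau u)))) by ring.
      rewrite ES by auto. ring.
Qed.

Definition integrand (F G : R -> R -> R) (r t : R) :=
  G (r * sin t) (r * cos t) * (r * cos t) - F (r * sin t) (r * cos t) * (- (r * sin t)).

Lemma sum_mult_r : forall A N c, sum_f_R0 A N * c = sum_f_R0 (fun i => A i * c) N.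
Proof. induction N; simpl; intros; [auto| rewrite <- IHN; ring]. Qed.

Lemma integrand_expand : forall n f g r t, integrand (poly2 n f) (poly2 n g) r t =
  sum_f_R0 (fun i => sum_f_R0 (fun j => g i j * (r ^ (i + S j) * trig_mono i (S j) t)
      + f i j * (r ^ (S i + j) * trig_mono (S i) j t)) (n - i)) n.
Proof.
  intros. unfold integrand, poly2.
  match goal with |- ?A - ?B * (- ?x) = _ => replace (A - B * (- x)) with (A + B * x) by ring end.
  rewrite !sum_mult_r, <- plus_sum. apply sum_eq. intros i Hi.
  rewrite !sum_mult_r, <- plus_sum. apply sum_eq. intros j Hj.
  unfold trig_mono. rewrite !Rpow_mult_distr, !pow_add. simpl. ring.
Qed.

Lemma integral_normal_integrand : forall n c pc f g,
  integral_normal n (fun u => fst (arc_bounds c pc u)) (fun u => snd (arc_bounds c pc u))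
    (fun u t => integrand (poly2 n f) (poly2 n g) (radius u) t).
Proof.
  intros. eapply integral_normal_ext; [| intros u t Hu; symmetry; apply integrand_expand].
  apply (integral_normal_sum n _ _ (fun i u t => sum_f_R0 (fun j => g i j * (radius u ^ (i + S j) * trig_mono i (S j) t)
      + f i j * (radius u ^ (S i + j) * trig_mono (S i) j t)) (n - i))).
  intros i Hi.
  apply (integral_normal_sum n _ _ (fun j u t => g i j * (radius u ^ (i + S j) * trig_mono i (S j) t)
      + f i j * (radius u ^ (S i + j) * trig_mono (S i) j t))).
  intros j Hj.
  apply (integral_normal_plus n _ _ (fun u t => g i j * (radius u ^ (i + S j) * trig_mono i (S j) t))
                     (fun u t => f i j * (radius u ^ (S i + j) * trig_mono (S i) j t))).
  - apply (integral_normal_scal n _ _ _ (fun u t => radius u ^ (i + S j) * trig_mono i (S j) t)). apply integral_normal_mono. lia.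
  - apply (integral_normal_scal n _ _ _ (fun u t => radius u ^ (S i + j) * trig_mono (S i) j t)). apply integral_normal_mono. lia.
Qed.

Lemma melnikov_normal_form : forall c n f1 g1 f2 g2, exists V, normal_form n V /\
  forall u, 0 < u -> melnikov c n f1 g1 f2 g2 (peval hpoly u) = V u.
Proof.
  intros. destruct (integral_normal_integrand n c true f1 g1) as [V1 [H1 G1]].
  destruct (integral_normal_integrand n c false f2 g2) as [V2 [H2 G2]].
  exists (fun u => V1 u + V2 u). split. apply normal_form_plus; auto.
  intros u Hu. unfold melnikov. unfold tA. rewrite u_of_hpoly by auto. fold (radius u). fold (tau u).
  specialize (H1 u Hu). specialize (H2 u Hu).
  destruct c; simpl in H1, H2; f_equal; apply Rint_is_RInt; auto.
Qed.

Lemma derivable_pt_lim_inv_pos : forall x, 0 < x -> derivable_pt_lim (fun y => / y) x (- / (x * x)).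
Proof.
  intros x Hx. apply derivable_pt_lim_ext_pos with (fun y => 1 / y); auto. intros; unfold Rdiv; ring.
  assert (H := derivable_pt_lim_div (fun _ => 1) id x 0 1 (derivable_pt_lim_const 1 x) (derivable_pt_lim_id x) ltac:(unfold id; lra)).
  replace (- / (x * x)) with ((0 * id x - 1 * 1) / (id x)²) by (unfold id, Rsqr; field; lra).
  exact H.
Qed.

Lemma tau_derivable : forall x, 0 < x -> derivable_pt_lim tau x (- / (1 + x * x)).
Proof.
  intros x Hx. unfold tau.
  replace (- / (1 + x * x)) with (/ (1 + (/ x) ^ 2) * (- / (x * x))) by (field; nra).
  apply (derivable_pt_lim_comp (fun y => / y) atan). apply derivable_pt_lim_inv_pos; auto. apply derivable_pt_lim_atan.
Qed.

Lemma derivable_pt_lim_pow_succ : forall f l x m, f x <> 0 -> derivable_pt_lim f x l ->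
  derivable_pt_lim (fun y => f y * f y ^ m) x (f x * f x ^ m * ((INR m + 1) * l / f x)).
Proof.
  intros f l x m Hf H.
  apply derivable_pt_lim_eq with (INR (S m) * f x ^ pred (S m) * l).
  - apply (derivable_pt_lim_comp f (fun y => y ^ S m)); auto. apply derivable_pt_lim_pow.
  - rewrite S_INR. simpl pred. field. auto.
Qed.

(* After j+1 steps the rational part has the
   positive denominator D_j(u) = u^(2j+1) (1+u^2)^(j+1) (1+2u^2)^(2j+1), whose
   logarithmic derivative is [denom_logder j]. *)
Definition denom (j : nat) (u : R) :=
  u * u ^ (2 * j) * ((1 + u * u) * (1 + u * u) ^ j) * ((1 + 2 * (u * u)) * (1 + 2 * (u * u)) ^ (2 * j)).

Definition denom_logder (j : nat) (u : R) :=
  (2 * INR j + 1) / u + 2 * (INR j + 1) * u / (1 + u * u) + 4 * (2 * INR j + 1) * u / (1 + 2 * (u * u)).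

Lemma denom_pos : forall j u, 0 < u -> 0 < denom j u.
Proof.
  intros. unfold denom. assert (0 < u * u) by nra.
  repeat apply Rmult_lt_0_compat; try apply pow_lt; lra.
Qed.

Lemma denom_deriv : forall j, deriv_pos (denom j) (fun u => denom j u * denom_logder j u).
Proof.
  intros j u Hu. unfold denom, denom_logder.
  assert (H1 : 0 < 1 + u * u) by nra. assert (H2 : 0 < 1 + 2 * (u * u)) by nra.
  assert (dq : derivable_pt_lim (fun y => 1 + y * y) u (2 * u)).
  { apply derivable_pt_lim_eq with (0 + (1 * u + u * 1)); [|ring].
    apply (derivable_pt_lim_plus (fun _ => 1) (fun y => y * y)).
    apply derivable_pt_lim_const. apply (derivable_pt_lim_mult id id); apply derivable_pt_lim_id. }
  assert (dq2 : derivable_pt_lim (fun y => 1 + 2 * (y * y)) u (4 * u)).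
  { apply derivable_pt_lim_eq with (0 + 2 * (1 * u + u * 1)); [|ring].
    apply (derivable_pt_lim_plus (fun _ => 1) (fun y => 2 * (y * y))).
    apply derivable_pt_lim_const. apply derivable_pt_lim_scal.
    apply (derivable_pt_lim_mult id id); apply derivable_pt_lim_id. }
  assert (dA := derivable_pt_lim_pow_succ id 1 u (2 * j) (Rgt_not_eq _ _ Hu) (derivable_pt_lim_id u)).
  assert (dB := derivable_pt_lim_pow_succ _ _ u j (Rgt_not_eq _ _ H1) dq).
  assert (dC := derivable_pt_lim_pow_succ _ _ u (2 * j) (Rgt_not_eq _ _ H2) dq2).
  eapply derivable_pt_lim_eq; [exact (derivable_pt_lim_mult _ _ u _ _ (derivable_pt_lim_mult _ _ u _ _ dA dB) dC)|].
  unfold id, mult_fct; cbv beta. rewrite mult_INR. simpl INR. field. repeat split; lra.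
Qed.

Lemma pos_rat_denom : forall j, pos_rat (denom j).
Proof.
  intros j. unfold denom.
  assert (Su : pos_rat (fun u => u)) by (apply pos_rat_ext with (peval (0 :: 1 :: nil)); [apply pos_rat_poly| intros; simpl; ring]).
  assert (S1 : pos_rat (fun u => 1 + u * u)) by (apply pos_rat_ext with (peval (1 :: 0 :: 1 :: nil)); [apply pos_rat_poly| intros; simpl; ring]).
  assert (S2 : pos_rat (fun u => 1 + 2 * (u * u))) by (apply pos_rat_ext with (peval (1 :: 0 :: 2 :: nil)); [apply pos_rat_poly| intros; simpl; ring]).
  repeat apply pos_rat_mul; auto; apply pos_rat_pow; auto.
Qed.

Lemma peval_hpoly_der : forall u, peval (pder hpoly) u = 2 * u + 4 * (u * u * u).
Proof. intros. unfold hpoly. simpl. ring. Qed.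

Lemma hpoly_der_pos : forall u, 0 < u -> 0 < peval (pder hpoly) u.
Proof. intros. rewrite peval_hpoly_der. nra. Qed.

Lemma pos_rat_inv_hpoly_der : pos_rat (fun u => / peval (pder hpoly) u).
Proof. apply pos_rat_inv. apply pos_rat_poly. intros. apply Rgt_not_eq. apply hpoly_der_pos; auto. Qed.

(* Numerator recursion, with x = u^2.  Dividing the derivative of the j-th
   reduced form by h' = 2u(1+2x) and writing it over D_(j+1) = D_j x(1+x)(1+2x)^2:
   - p(x)/D_j contributes (hder_factor p' - logder_factor_j p)/2, where
     hder_factor = 2x(1+x)(1+2x) and logder_factor_j = u(1+x)(1+2x) l_j;
   - B(h) tau' = - B(h)/(1+x) contributes - denom_ratio_j B(x+x^2)/2, where
     denom_ratio_j = x^(j+1) (1+x)^(j+1) (1+2x)^(2j+2). *)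
Definition hder_factor : list R := 0 :: 2 :: 6 :: 4 :: nil.

Definition logder_factor (j : nat) : list R := (2 * INR j + 1) :: (16 * INR j + 9) :: (16 * INR j + 10) :: nil.

Definition denom_ratio (j : nat) : list R :=
  pmul (pmul (mono (S j)) (ppow (1 :: 1 :: nil) (S j))) (ppow (1 :: 2 :: nil) (2 * S j)).

Definition next_numer (j : nat) (B p : list R) : list R :=
  padd (pscale (1/2) (padd (pmul (pder p) hder_factor) (pscale (-1) (pmul p (logder_factor j)))))
       (pscale (-1/2) (pmul (pcomp B hpoly_sq) (denom_ratio j))).

Definition reduced (j : nat) (B Cc p : list R) (u : R) : R :=
  peval B (peval hpoly u) * tau u + peval Cc (peval hpoly u) + peval p (u * u) / denom j u.

Lemma denom_S : forall j u, denom (S j) u = u * (u ^ (2 * j) * (u * u)) * ((1 + u * u) * ((1 + u * u) ^ j * (1 + u * u))) *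
   ((1 + 2 * (u * u)) * ((1 + 2 * (u * u)) ^ (2 * j) * ((1 + 2 * (u * u)) * (1 + 2 * (u * u))))).
Proof.
  intros. unfold denom. replace (2 * S j)%nat with (2 * j + 2)%nat by lia. rewrite !pow_add. simpl. ring.
Qed.

Lemma peval_denom_ratio : forall j u, peval (denom_ratio j) (u * u) = (u ^ (2 * j) * (u * u)) * ((1 + u * u) ^ j * (1 + u * u)) *
   ((1 + 2 * (u * u)) ^ (2 * j) * ((1 + 2 * (u * u)) * (1 + 2 * (u * u)))).
Proof.
  intros. unfold denom_ratio. rewrite !peval_pmul, peval_mono, !peval_ppow.
  replace (peval (1 :: 1 :: nil) (u * u)) with (1 + u * u) by (simpl; ring).
  replace (peval (1 :: 2 :: nil) (u * u)) with (1 + 2 * (u * u)) by (simpl; ring).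
  replace (2 * S j)%nat with (2 * j + 2)%nat by lia. rewrite (pow_add _ (2 * j) 2).
  rewrite (pow_mult u 2 j). replace (u ^ 2) with (u * u) by ring.
  rewrite <- !tech_pow_Rmult. replace ((1 + 2 * (u * u)) ^ 2) with ((1 + 2 * (u * u)) * (1 + 2 * (u * u))) by ring.
  ring.
Qed.

Lemma peval_comp_hpoly_deriv : forall B u, derivable_pt_lim (fun y => peval B (peval hpoly y)) u (peval (pder B) (peval hpoly u) * peval (pder hpoly) u).
Proof.
  intros. apply (derivable_pt_lim_comp (peval hpoly) (peval B)); apply peval_pder.
Qed.

Lemma reduced_deriv : forall j B Cc p,
  deriv_pos (reduced j B Cc p) (fun u => peval (pder hpoly) u * reduced (S j) (pder B) (pder Cc) (next_numer j B p) u).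
Proof.
  intros j B Cc p u Hu.
  assert (dB := derivable_pt_lim_mult _ _ u _ _ (peval_comp_hpoly_deriv B u) (tau_derivable u Hu)).
  assert (dC := peval_comp_hpoly_deriv Cc u).
  assert (Dn : denom j u <> 0) by (apply Rgt_not_eq; apply denom_pos; auto).
  assert (dP := derivable_pt_lim_div _ _ u _ _ (peval_sq_deriv p u) (denom_deriv j u Hu) Dn).
  assert (H := derivable_pt_lim_plus _ _ u _ _ (derivable_pt_lim_plus _ _ u _ _ dB dC) dP).
  apply derivable_pt_lim_ext_pos with ((fun y => peval B (peval hpoly y)) * tau + (fun y => peval Cc (peval hpoly y)) + (fun y => peval p (y * y)) / denom j)%F; auto.
  intros; unfold reduced, plus_fct, mult_fct, div_fct; auto.
  eapply derivable_pt_lim_eq; [exact H|].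
  unfold reduced, next_numer, plus_fct, mult_fct, div_fct.
  repeat rewrite ?peval_padd, ?peval_pscale, ?peval_pmul. rewrite peval_pcomp, peval_hpoly_sq, peval_denom_ratio, denom_S, peval_hpoly_der.
  unfold denom, denom_logder, Rsqr.
  assert (H1 : 0 < 1 + u * u) by nra. assert (H2 : 0 < 1 + 2 * (u * u)) by nra.
  assert (X0 : u ^ (2 * j) <> 0) by (apply pow_nonzero; lra).
  assert (Y0 : (1 + u * u) ^ j <> 0) by (apply pow_nonzero; lra).
  assert (Z0 : (1 + 2 * (u * u)) ^ (2 * j) <> 0) by (apply pow_nonzero; lra).
  unfold hder_factor, logder_factor. cbn [peval]. field. repeat split; lra.
Qed.

Definition first_numer (S B0 : list R) : list R :=
  pscale (1/2) (padd (pmul (padd S (pmul (pder S) (0 :: 2 :: nil))) (1 :: 1 :: nil)) (pscale (-1) (pcomp B0 hpoly_sq))).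

Lemma normal_form_deriv : forall S C Q, deriv_pos (fun u => u * peval S (u * u) + peval (0 :: C) (peval hpoly u) + peval (0 :: Q) (peval hpoly u) * tau u)
  (fun u => peval (pder hpoly) u * reduced 0 (pder (0 :: Q)) (pder (0 :: C)) (first_numer S (0 :: Q)) u).
Proof.
  intros S C Q u Hu.
  assert (dS : derivable_pt_lim (fun y => y * peval S (y * y)) u (1 * peval S (u * u) + u * (peval (pder S) (u * u) * (1 * u + u * 1)))).
  { apply (derivable_pt_lim_mult id (fun y => peval S (y * y))). apply derivable_pt_lim_id. apply peval_sq_deriv. }
  assert (dB := derivable_pt_lim_mult _ _ u _ _ (peval_comp_hpoly_deriv (0 :: Q) u) (tau_derivable u Hu)).
  assert (dC := peval_comp_hpoly_deriv (0 :: C) u).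
  assert (H := derivable_pt_lim_plus _ _ u _ _ (derivable_pt_lim_plus _ _ u _ _ dS dC) dB).
  apply derivable_pt_lim_ext_pos with ((fun y => (y * peval S (y * y))%R) + (fun y => peval (0 :: C) (peval hpoly y)) + (fun y => peval (0 :: Q) (peval hpoly y)) * tau)%F; auto.
  intros; unfold plus_fct, mult_fct; auto.
  eapply derivable_pt_lim_eq; [exact H|].
  unfold reduced, first_numer, plus_fct, mult_fct.
  repeat rewrite ?peval_padd, ?peval_pscale, ?peval_pmul. rewrite peval_pcomp, peval_hpoly_sq, peval_hpoly_der.
  unfold denom. assert (H1 : 0 < 1 + u * u) by nra. assert (H2 : 0 < 1 + 2 * (u * u)) by nra.
  cbn [peval pow]. simpl Nat.mul. cbn [pow]. field. repeat split; lra.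
Qed.

(* Iterating: [numer S B0 j] is the numerator after j+1 steps and
   [deriv_chain V S B0 C0 i] the i-th function of the chain (V for i = 0). *)
Fixpoint numer (Sl B0 : list R) (j : nat) : list R :=
  match j with O => first_numer Sl B0 | S j' => next_numer j' (Nat.iter (S j') pder B0) (numer Sl B0 j') end.

Definition deriv_chain (V : R -> R) (Sl B0 Cc0 : list R) (i : nat) : R -> R :=
  match i with O => V | S j => reduced j (Nat.iter (S j) pder B0) (Nat.iter (S j) pder Cc0) (numer Sl B0 j) end.

Lemma len_denom_ratio_pos : forall j, (1 <= length (denom_ratio j))%nat.
Proof.
  intros. unfold denom_ratio. apply len_pmul_pos. apply len_pmul_pos. rewrite len_mono. lia.
Qed.

Lemma len_denom_ratio : forall j, (length (denom_ratio j) <= 4 * j + 5)%nat.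
Proof.
  intros. unfold denom_ratio.
  assert (A := len_ppow2 (1 :: 1 :: nil) (S j) eq_refl).
  assert (B := len_ppow2 (1 :: 2 :: nil) (2 * S j) eq_refl).
  assert (C := len_pmul (mono (S j)) (ppow (1 :: 1 :: nil) (S j)) ltac:(lia)).
  rewrite len_mono in C.
  assert (D := len_pmul (pmul (mono (S j)) (ppow (1 :: 1 :: nil) (S j))) (ppow (1 :: 2 :: nil) (2 * S j)) ltac:(lia)).
  lia.
Qed.

Lemma len_next_numer : forall j B p, (length (next_numer j B p) <= Nat.max (length p + 2) (2 * length B + 4 * j + 3))%nat.
Proof.
  intros. unfold next_numer. rewrite !len_padd, !len_pscale, len_padd, len_pscale.
  assert (E1 := len_pmul_pder p hder_factor ltac:(simpl; lia)).
  assert (E2 := len_pmul p (logder_factor j) ltac:(simpl; lia)).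
  assert (E3 : (length (pmul (pcomp B hpoly_sq) (denom_ratio j)) <= 2 * length B + 4 * j + 3)%nat).
  { destruct B as [|b B']; [simpl; lia|].
    assert (H := len_pmul (pcomp (b :: B') hpoly_sq) (denom_ratio j) (len_denom_ratio_pos j)).
    assert (H1 := len_pcomp_hpoly_sq (b :: B')). assert (H2 := len_denom_ratio j).
    simpl length in *. lia. }
  simpl length in *. lia.
Qed.

Lemma len_first_numer : forall Sl B0, (length (first_numer Sl B0) <= Nat.max (length Sl + 1) (2 * length B0 - 1))%nat.
Proof.
  intros. unfold first_numer. rewrite len_pscale, len_padd, len_pscale.
  assert (A := len_pmul_pder Sl (0 :: 2 :: nil) ltac:(simpl; lia)).
  assert (B := len_pmul (padd Sl (pmul (pder Sl) (0 :: 2 :: nil))) (1 :: 1 :: nil) ltac:(simpl; lia)).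
  assert (C := len_pcomp_hpoly_sq B0).
  rewrite len_padd in B. simpl length in *. lia.
Qed.

Lemma len_numer : forall Sl B0 K j, (length B0 <= K + 1)%nat -> (j <= K)%nat ->
  (length (numer Sl B0 j) <= Nat.max (length Sl + 2 * j + 1) (2 * K + 2 * j + 1))%nat.
Proof.
  induction j; intros HB Hj.
  - simpl. assert (H := len_first_numer Sl B0). lia.
  - change (numer Sl B0 (S j)) with (next_numer j (Nat.iter (S j) pder B0) (numer Sl B0 j)). assert (H := len_next_numer j (Nat.iter (S j) pder B0) (numer Sl B0 j)).
    assert (H2 := len_iter_pder (S j) B0). specialize (IHj HB ltac:(lia)). lia.
Qed.

Lemma deriv_chain_step : forall V Sl C Q,
  (forall u, 0 < u -> V u = u * peval Sl (u * u) + peval hpoly u * peval C (peval hpoly u)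
                            + peval hpoly u * peval Q (peval hpoly u) * tau u) ->
  forall i, exists g w, deriv_pos (deriv_chain V Sl (0 :: Q) (0 :: C) i) g /\ pos_rat w /\
    (forall x, 0 < x -> w x <> 0) /\
    forall x, 0 < x -> deriv_chain V Sl (0 :: Q) (0 :: C) (S i) x = w x * g x.
Proof.
  intros V Sl C Q EV i.
  exists (fun u => peval (pder hpoly) u * deriv_chain V Sl (0 :: Q) (0 :: C) (S i) u), (fun u => / peval (pder hpoly) u).
  split; [|split; [apply pos_rat_inv_hpoly_der|split]].
  - destruct i.
    + simpl. eapply deriv_pos_ext; [| |apply (normal_form_deriv Sl C Q)].
      * intros y Hy. rewrite EV by auto. simpl. ring.
      * intros; reflexivity.
    + simpl deriv_chain. apply reduced_deriv.
  - intros x Hx. apply Rinv_neq_0_compat. apply Rgt_not_eq. apply hpoly_der_pos; auto.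
  - intros x Hx. assert (H := hpoly_der_pos x Hx). field. lra.
Qed.

(* After K+1 steps the polynomial parts of degree < K have been differentiated
   away, and only the even polynomial over the positive denominator is left. *)
Lemma deriv_chain_last : forall V Sl C Q K, (length C <= K)%nat -> (length Q <= K)%nat ->
  forall u, 0 < u -> deriv_chain V Sl (0 :: Q) (0 :: C) (S K) u = peval (numer Sl (0 :: Q) K) (u * u) / denom K u.
Proof.
  intros V Sl C Q K HC HQ u Hu.
  change (deriv_chain V Sl (0 :: Q) (0 :: C) (S K) u)
    with (reduced K (Nat.iter (S K) pder (0 :: Q)) (Nat.iter (S K) pder (0 :: C)) (numer Sl (0 :: Q) K) u).
  unfold reduced.
  rewrite (iter_pder_nil (S K) (0 :: Q)), (iter_pder_nil (S K) (0 :: C)) by (simpl; lia).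
  simpl peval. ring.
Qed.

(* Zeros of a function in normal form: K+1 derivative steps plus the zeros of
   the final even polynomial. *)
Lemma normal_form_zeros : forall n V, normal_form n V -> not_identically_zero V ->
  exists L, (L <= Nat.max (n + 2 * half_up n + 2) (4 * half_up n + 1))%nat /\ zeros_at_most V (half_up n + 1 + (L - 1)).
Proof.
  intros n V [Sl [C [Q [HS [HC [HQ EV]]]]]] Hn.
  set (K := half_up n) in *.
  exists (length (numer Sl (0 :: Q) K)). split.
  { assert (H := len_numer Sl (0 :: Q) K K ltac:(simpl; lia) ltac:(lia)). lia. }
  apply (zeros_at_most_chain (K + 1) (deriv_chain V Sl (0 :: Q) (0 :: C)) (length (numer Sl (0 :: Q) K) - 1)); auto.
  - intros i _. apply deriv_chain_step; auto.
  - rewrite Nat.add_1_r. intros Hnz.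
    assert (E := deriv_chain_last V Sl C Q K HC HQ).
    apply zeros_at_most_mul with (fun u => peval (numer Sl (0 :: Q) K) (u * u)) (denom K).
    + apply pos_rat_denom.
    + intros x Hx. rewrite E by auto. assert (H := denom_pos K x Hx). field. lra.
    + apply even_poly_zeros. destruct Hnz as [x [Hx Hfx]]. exists x. split; auto.
      intro Hz. apply Hfx. rewrite E by auto. rewrite Hz. unfold Rdiv. ring.
Qed.

Lemma bound_arith : forall n L, (2 <= n)%nat -> (L <= Nat.max (n + 2 * half_up n + 2) (4 * half_up n + 1))%nat ->
  (half_up n + 1 + (L - 1) <= 2 * n + 5 * ((n - 1) / 2) + 4)%nat.
Proof.
  intros n L Hn HL. unfold half_up in *.
  pose proof (Nat.div_mod (n + 1) 2 ltac:(lia)). pose proof (Nat.mod_upper_bound (n + 1) 2 ltac:(lia)).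
  pose proof (Nat.div_mod (n - 1) 2 ltac:(lia)). pose proof (Nat.mod_upper_bound (n - 1) 2 ltac:(lia)).
  lia.
Qed.

Theorem melnikov_upper : forall (n : nat), (2 <= n)%nat ->
   forall (c : curve) (f1 g1 f2 g2 : nat -> nat -> R),
     not_identically_zero (melnikov c n f1 g1 f2 g2) ->
     zeros_at_most (melnikov c n f1 g1 f2 g2) (2 * n + 5 * ((n - 1) / 2) + 4).
Proof.
  intros n Hn c f1 g1 f2 g2 Hnz. destruct (melnikov_normal_form c n f1 g1 f2 g2) as [V [G E]].
  apply zeros_at_most_reparam with V; auto.
  destruct (normal_form_zeros n V G (nonzero_reparam _ _ E Hnz)) as [L [HL HZ]].
  eapply zeros_at_most_weaken; [exact HZ|]. apply bound_arith; auto.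
Qed.

(* For n = 1 the normal form is V = u (s0 + s1 u^2) + h c0 + h q0 tau; the
   derivative of V / h is an even polynomial of degree 2 over u^2 (1+u^2)^2. *)
Definition deg1_numer (s0 s1 q0 : R) : list R := (- s0) :: (s1 - 3 * s0 - q0) :: (- (s1 + q0)) :: nil.

Lemma deg1_quotient_deriv : forall s0 s1 c0 q0,
  deriv_pos (fun y => (s0 + s1 * (y * y)) / (y * (1 + y * y)) + c0 + q0 * tau y)
            (fun u => peval (deg1_numer s0 s1 q0) (u * u) / (u * u * ((1 + u * u) * (1 + u * u)))).
Proof.
  intros s0 s1 c0 q0 u Hu.
  assert (dN : derivable_pt_lim (fun y => s0 + s1 * (y * y)) u (0 + s1 * (1 * u + u * 1))).
  { apply (derivable_pt_lim_plus (fun _ => s0) (fun y => s1 * (y * y))). apply derivable_pt_lim_const.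
    apply derivable_pt_lim_scal. apply (derivable_pt_lim_mult id id); apply derivable_pt_lim_id. }
  assert (dD : derivable_pt_lim (fun y => y * (1 + y * y)) u (1 * (1 + u * u) + u * (0 + (1 * u + u * 1)))).
  { apply (derivable_pt_lim_mult id (fun y => 1 + y * y)). apply derivable_pt_lim_id.
    apply (derivable_pt_lim_plus (fun _ => 1) (fun y => y * y)). apply derivable_pt_lim_const.
    apply (derivable_pt_lim_mult id id); apply derivable_pt_lim_id. }
  assert (dq := derivable_pt_lim_div _ _ u _ _ dN dD ltac:(nra)).
  assert (H := derivable_pt_lim_plus _ _ u _ _ (derivable_pt_lim_plus _ _ u _ _ dq (derivable_pt_lim_const c0 u))
                 (derivable_pt_lim_scal _ q0 u _ (tau_derivable u Hu))).
  eapply derivable_pt_lim_eq; [exact H|]. unfold deg1_numer, Rsqr. simpl peval. field. split; nra.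
Qed.

(* H(1) <= 3 for the normal form: one derivative step, then the two zeros of
   the even quadratic. *)
Lemma normal_form_zeros_deg1 : forall V, normal_form 1 V -> not_identically_zero V -> zeros_at_most V 3.
Proof.
  intros V [Sl [C [Q [HS [HC [HQ EV]]]]]] Hn.
  change (half_up 1) with 1%nat in HC, HQ.
  set (s0 := nth 0 Sl 0). set (s1 := nth 1 Sl 0). set (c0 := nth 0 C 0). set (q0 := nth 0 Q 0).
  assert (EV' : forall u, 0 < u -> V u / peval hpoly u = (s0 + s1 * (u * u)) / (u * (1 + u * u)) + c0 + q0 * tau u).
  { intros u Hu.
    assert (E : V u = u * (s0 + u * u * s1) + peval hpoly u * c0 + peval hpoly u * q0 * tau u).
    { rewrite EV, (peval_len2 Sl), (peval_len1 C), (peval_len1 Q) by auto. auto. }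
    rewrite E, peval_hpoly. field. split; nra. }
  set (g0 := fun u => V u / peval hpoly u).
  apply zeros_at_most_mul with g0 (fun u => / peval hpoly u).
  { apply pos_rat_inv. apply pos_rat_poly. intros; apply Rgt_not_eq; apply hpoly_pos; auto. }
  { intros x Hx. unfold g0. unfold Rdiv. ring. }
  replace 3%nat with (1 + 2)%nat by lia.
  apply (zeros_at_most_chain 1 (fun i => match i with O => g0 | _ => fun u => peval (deg1_numer s0 s1 q0) (u * u) end) 2).
  - intros i Hi. assert (i = 0%nat) by lia. subst i.
    exists (fun u => peval (deg1_numer s0 s1 q0) (u * u) / (u * u * ((1 + u * u) * (1 + u * u)))),
           (fun u => u * u * ((1 + u * u) * (1 + u * u))).
    split; [|split; [|split]].
    + eapply deriv_pos_ext; [| |apply (deg1_quotient_deriv s0 s1 c0 q0)].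
      * intros y Hy. unfold g0. rewrite EV' by auto. reflexivity.
      * reflexivity.
    + apply pos_rat_ext with (peval (0 :: 0 :: 1 :: 0 :: 2 :: 0 :: 1 :: nil)). apply pos_rat_poly. intros; simpl; ring.
    + intros x Hx. assert (0 < x * x) by nra. assert (0 < 1 + x * x) by nra.
      apply Rgt_not_eq. apply Rmult_lt_0_compat; auto. apply Rmult_lt_0_compat; auto.
    + intros x Hx. field. split; nra.
  - destruct Hn as [x [Hx Hv]]. exists x. split; auto. unfold g0. intro H.
    apply Hv. assert (0 < peval hpoly x) by (apply hpoly_pos; auto).
    apply (Rmult_eq_reg_r (/ peval hpoly x)). rewrite Rmult_0_l. unfold Rdiv in H. auto.
    apply Rinv_neq_0_compat. lra.
  - intros Hnz. apply (even_poly_zeros (deg1_numer s0 s1 q0)). exact Hnz.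
Qed.

Theorem melnikov_deg1_upper : forall (c : curve) (f1 g1 f2 g2 : nat -> nat -> R),
  not_identically_zero (melnikov c 1 f1 g1 f2 g2) -> zeros_at_most (melnikov c 1 f1 g1 f2 g2) 3.
Proof.
  intros c f1 g1 f2 g2 Hnz. destruct (melnikov_normal_form c 1 f1 g1 f2 g2) as [V [G E]].
  apply zeros_at_most_reparam with V; auto. apply normal_form_zeros_deg1; auto. eapply nonzero_reparam; eauto.
Qed.

Definition lin_coeffs (a00 a01 a10 : R) : nat -> nat -> R := fun i j =>
  match i, j with O, O => a00 | O, S O => a01 | S O, O => a10 | _, _ => 0 end.

Lemma poly2_lin_coeffs : forall a b c x y, poly2 1 (lin_coeffs a b c) x y = a + b * y + c * x.
Proof. intros. unfold poly2, lin_coeffs. simpl. ring. Qed.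

Lemma trig_continuous : forall x, continuous (fun t => sin t * sin t) x /\ continuous (fun t => cos t * cos t) x /\ continuous cos x.
Proof.
  intros x. repeat split; apply (ex_derive_continuous (K:=R_AbsRing) (V:=R_NormedModule)); auto_derive; auto.
Qed.

Lemma is_RInt_sin2 : forall a b, is_RInt (fun t => sin t * sin t) a b (/2 * (b - sin b * cos b) - /2 * (a - sin a * cos a)).
Proof.
  intros. apply (is_RInt_primitive (fun t => /2 * (t - sin t * cos t))).
  - intros x. apply is_derive_Reals. auto_derive; auto. pose proof (sin2_cos2 x). unfold Rsqr in *. lra.
  - intros; apply trig_continuous.
Qed.

Lemma is_RInt_cos2 : forall a b, is_RInt (fun t => cos t * cos t) a b (/2 * (b + sin b * cos b) - /2 * (a + sin a * cos a)).
Proof.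
  intros. apply (is_RInt_primitive (fun t => /2 * (t + sin t * cos t))).
  - intros x. apply is_derive_Reals. auto_derive; auto. pose proof (sin2_cos2 x). unfold Rsqr in *. lra.
  - intros; apply trig_continuous.
Qed.

Lemma is_RInt_cos : forall a b, is_RInt cos a b (sin b - sin a).
Proof.
  intros. apply (is_RInt_primitive sin).
  - intros x. apply derivable_pt_lim_sin.
  - intros; apply trig_continuous.
Qed.

Lemma sin_2PI_sub : forall t, sin (2 * PI - t) = - sin t.
Proof. intros. rewrite sin_minus, sin_2PI, cos_2PI. ring. Qed.

Lemma cos_2PI_sub : forall t, cos (2 * PI - t) = cos t.
Proof. intros. rewrite cos_minus, sin_2PI, cos_2PI. ring. Qed.

Lemma sin_2PI_add : forall t, sin (2 * PI + t) = sin t.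
Proof. intros. rewrite sin_plus, sin_2PI, cos_2PI. ring. Qed.

Lemma cos_2PI_add : forall t, cos (2 * PI + t) = cos t.
Proof. intros. rewrite cos_plus, sin_2PI, cos_2PI. ring. Qed.

Lemma sin_3PI_sub : forall t, sin (3 * PI - t) = sin t.
Proof. intros. replace (3 * PI - t) with (2 * PI + (PI - t)) by ring. rewrite sin_2PI_add, sin_PI_x. auto. Qed.

Lemma cos_3PI_sub : forall t, cos (3 * PI - t) = - cos t.
Proof. intros. replace (3 * PI - t) with (2 * PI + (PI - t)) by ring. rewrite cos_2PI_add, Rtrigo_facts.cos_pi_minus. auto. Qed.

(* The perturbation of the example, depending on parameters alpha, beta, gamma,
   delta, chosen so that M(h) = alpha u + beta u^3 + gamma h tau + delta h. *)
Definition example_f1 (de : R) := lin_coeffs 0 0 (de / PI).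

Definition example_g1 := lin_coeffs 0 0 0.

Definition example_f2 (be ga de : R) := lin_coeffs 0 0 ((ga - be) / 2 + de / PI).

Definition example_g2 (c : curve) (al be ga : R) :=
  lin_coeffs (match c with ParabolaUp => al / 2 | ParabolaDown => - al / 2 end) ((ga + be) / 2) 0.

Lemma example_melnikov : forall c al be ga de u, 0 < u ->
  melnikov c 1 (example_f1 de) example_g1 (example_f2 be ga de) (example_g2 c al be ga) (peval hpoly u) =
  al * u + be * (u * (u * u)) + ga * peval hpoly u * tau u + de * peval hpoly u.
Proof.
  intros c al be ga de u Hu. unfold melnikov. unfold tA. rewrite u_of_hpoly by auto. fold (radius u). fold (tau u).
  assert (PI0 : PI <> 0) by (pose proof PI_RGT_0; lra).
  assert (Es := radius_sin u Hu). assert (Ec := radius_cos u Hu). assert (Er := radius_sq u Hu).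
  set (r := radius u) in *. set (t := tau u) in *.
  set (A1 := de / PI). set (A2 := (ga - be) / 2 + de / PI). set (b2 := (ga + be) / 2).
  assert (I1 : forall a b, is_RInt (fun x => poly2 1 example_g1 (r * sin x) (r * cos x) * (r * cos x) -
       poly2 1 (example_f1 de) (r * sin x) (r * cos x) * - (r * sin x)) a b
       (A1 * (r * r) * (/2 * (b - sin b * cos b) - /2 * (a - sin a * cos a)))).
  { intros a b. eapply is_RInt_ext_R; [|reflexivity|apply (is_RInt_scal_R _ a b (A1 * (r * r)) _ (is_RInt_sin2 a b))].
    intros x. unfold example_g1, example_f1. rewrite !poly2_lin_coeffs. fold A1. ring. }
  assert (I2 : forall b0 a b, is_RInt (fun x => poly2 1 (lin_coeffs b0 b2 0) (r * sin x) (r * cos x) * (r * cos x) -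
       poly2 1 (lin_coeffs 0 0 A2) (r * sin x) (r * cos x) * - (r * sin x)) a b
       (b0 * r * (sin b - sin a) + b2 * (r * r) * (/2 * (b + sin b * cos b) - /2 * (a + sin a * cos a))
         + A2 * (r * r) * (/2 * (b - sin b * cos b) - /2 * (a - sin a * cos a)))).
  { intros b0 a b. eapply is_RInt_ext_R; [|reflexivity|apply (is_RInt_plus_R _ _ a b _ _ (is_RInt_plus_R _ _ a b _ _
       (is_RInt_scal_R _ a b (b0 * r) _ (is_RInt_cos a b)) (is_RInt_scal_R _ a b (b2 * (r * r)) _ (is_RInt_cos2 a b)))
       (is_RInt_scal_R _ a b (A2 * (r * r)) _ (is_RInt_sin2 a b)))].
    intros x. rewrite !poly2_lin_coeffs. ring. }
  destruct c; unfold arc_int, example_f2, example_g2; fold A2; fold b2.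
  - erewrite (Rint_is_RInt _ _ _ _ (I1 _ _)), (Rint_is_RInt _ _ _ _ (I2 _ _ _)).
    rewrite sin_2PI_sub, cos_2PI_sub, sin_2PI_add, cos_2PI_add.
    rewrite <- Er. replace (al * u + be * (u * (u * u))) with (al * (r * sin t) + be * ((r * sin t) * (r * cos t)))
      by (rewrite Es, Ec; ring).
    unfold A1, A2, b2. field. auto.
  - erewrite (Rint_is_RInt _ _ _ _ (I1 _ _)), (Rint_is_RInt _ _ _ _ (I2 _ _ _)).
    rewrite sin_3PI_sub, cos_3PI_sub, Rtrigo_facts.sin_pi_plus, Rtrigo_facts.cos_pi_plus, sin_PI_x, Rtrigo_facts.cos_pi_minus.
    rewrite <- Er. replace (al * u + be * (u * (u * u))) with (al * (r * sin t) + be * ((r * sin t) * (r * cos t)))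
      by (rewrite Es, Ec; ring).
    unfold A1, A2, b2. field. auto.
Qed.

(* The parameters of the example: V has zeros at u = 1, sqrt 3, 1/sqrt 3
   (where tau = pi/4, pi/6, pi/3), and V < 0 near 0. *)
Definition r3 := sqrt 3.

Definition ex_alpha := 6 * r3 - 12.

Definition ex_beta := 12 - 10 * r3.

Definition ex_gamma := (48 * r3 - 72) / PI.

Definition ex_delta := 18 - 10 * r3.

Definition example_V (u : R) := ex_alpha * u + ex_beta * (u * (u * u)) + ex_gamma * peval hpoly u * tau u + ex_delta * peval hpoly u.

Lemma r3_sq : r3 * r3 = 3.
Proof. unfold r3. apply sqrt_sqrt. lra. Qed.

Lemma r3_pos : 0 < r3.
Proof. unfold r3. apply Rlt_sqrt3_0. Qed.

Lemma tau_1 : tau 1 = PI / 4.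
Proof. unfold tau. rewrite Rinv_1. apply atan_1. Qed.

Lemma tau_r3 : tau r3 = PI / 6.
Proof.
  unfold tau. replace (/ r3) with (tan (PI / 6)). apply atan_tan. pose proof PI_RGT_0. lra.
  rewrite tan_PI6. unfold r3. field. apply Rgt_not_eq. apply Rlt_sqrt3_0.
Qed.

Lemma tau_inv_r3 : tau (/ r3) = PI / 3.
Proof.
  unfold tau. rewrite Rinv_inv. replace r3 with (tan (PI / 3)). apply atan_tan. pose proof PI_RGT_0. lra.
  rewrite tan_PI3. auto.
Qed.

Lemma r3_pows : r3 ^ 2 = 3 /\ r3 ^ 3 = 3 * r3 /\ r3 ^ 4 = 9 /\ r3 ^ 5 = 9 * r3 /\ r3 ^ 6 = 27.
Proof.
  assert (H := r3_sq). repeat split.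
  - rewrite <- H; ring.
  - rewrite <- H; ring.
  - replace 9 with (3 * 3) by ring. rewrite <- H; ring.
  - replace 9 with (3 * 3) by ring. rewrite <- H; ring.
  - replace 27 with (3 * 3 * 3) by ring. rewrite <- H; ring.
Qed.

Lemma example_V_1 : example_V 1 = 0.
Proof.
  unfold example_V. rewrite tau_1, peval_hpoly. unfold ex_alpha, ex_beta, ex_gamma, ex_delta.
  assert (PI0 : PI <> 0) by (pose proof PI_RGT_0; lra). field_simplify; auto. lra.
Qed.

Lemma example_V_r3 : example_V r3 = 0.
Proof.
  unfold example_V. rewrite tau_r3, peval_hpoly. unfold ex_alpha, ex_beta, ex_gamma, ex_delta.
  assert (PI0 : PI <> 0) by (pose proof PI_RGT_0; lra). assert (H := r3_sq).
  field_simplify; auto. destruct r3_pows as [E2 [E3 [E4 [E5 E6]]]]. rewrite ?E6, ?E5, ?E4, ?E3, ?E2. lra.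
Qed.

Lemma example_V_inv_r3 : example_V (/ r3) = 0.
Proof.
  unfold example_V. rewrite tau_inv_r3, peval_hpoly. unfold ex_alpha, ex_beta, ex_gamma, ex_delta.
  assert (PI0 : PI <> 0) by (pose proof PI_RGT_0; lra). assert (H := r3_sq). assert (H0 := r3_pos).
  field_simplify; try lra. destruct r3_pows as [E2 [E3 [E4 [E5 E6]]]]. rewrite ?E6, ?E5, ?E4, ?E3, ?E2. match goal with |- ?A / ?B = 0 => replace A with 0 by ring end. unfold Rdiv; ring.
Qed.

Lemma example_V_small : example_V (/ 100) < 0.
Proof.
  assert (H := r3_sq). assert (H0 := r3_pos).
  assert (Sb : 173 / 100 < r3 < 174 / 100) by (split; nra).
  assert (P3 : 3 < PI) by (pose proof PI2_3_2; lra).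
  assert (P4 := PI_4).
  assert (T2 : tau (/ 100) < 2) by (unfold tau; pose proof (atan_bound (/ / 100)); lra).
  unfold example_V. rewrite peval_hpoly.
  set (u := / 100) in *. assert (Hu : u * 100 = 1) by (unfold u; field).
  assert (Hu0 : 0 < u) by (unfold u; lra).
  set (t := tau u) in *.
  set (phi := u * u + u * u * (u * u)).
  assert (Hphi : 0 < phi < 11 / 100000) by (unfold phi; split; nra).
  assert (Ga : 0 < ex_gamma < 39 / 10).
  { unfold ex_gamma. split. apply Rdiv_lt_0_compat; lra.
    apply Rmult_lt_reg_r with PI. lra. unfold Rdiv. rewrite Rmult_assoc, Rinv_l by lra. nra. }
  assert (A1 : ex_alpha * u < - 156 / 10000) by (unfold ex_alpha; nra).
  assert (A2 : ex_beta * (u * (u * u)) < 0) by (unfold ex_beta; assert (0 < u * (u * u)) by nra; nra).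
  assert (A3 : ex_gamma * phi * t < 86 / 100000).
  { assert (ex_gamma * phi < 43 / 100000) by nra. assert (0 < ex_gamma * phi) by nra. destruct (Rle_dec t 0); nra. }
  assert (A4 : ex_delta * phi < 8 / 100000) by (unfold ex_delta; nra).
  fold phi. lra.
Qed.

Lemma zero_entry_reparam : forall (M V : R -> R) u, (forall u, 0 < u -> M (peval hpoly u) = V u) ->
  0 < u -> V u = 0 -> zero_entry M (peval hpoly u, 1%nat).
Proof.
  intros M V u E Hu HV. unfold zero_entry; cbn [fst snd].
  split; [apply hpoly_pos; auto|split; [lia|]]. apply mult_ge_1. rewrite E; auto.
Qed.

Theorem melnikov_deg1_lower : forall c : curve, exists f1 g1 f2 g2 : nat -> nat -> R,
  not_identically_zero (melnikov c 1 f1 g1 f2 g2) /\ zeros_at_least (melnikov c 1 f1 g1 f2 g2) 3.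
Proof.
  intros c. exists (example_f1 ex_delta), example_g1, (example_f2 ex_beta ex_gamma ex_delta), (example_g2 c ex_alpha ex_beta ex_gamma).
  assert (E : forall u, 0 < u -> melnikov c 1 (example_f1 ex_delta) example_g1 (example_f2 ex_beta ex_gamma ex_delta) (example_g2 c ex_alpha ex_beta ex_gamma) (peval hpoly u) = example_V u).
  { intros u Hu. rewrite example_melnikov by auto. reflexivity. }
  assert (H := r3_sq). assert (H0 := r3_pos). assert (0 < / r3) by (apply Rinv_0_lt_compat; lra).
  split.
  - exists (peval hpoly (/ 100)). split. apply hpoly_pos; lra. rewrite E by lra. pose proof example_V_small. lra.
  - exists ((peval hpoly 1, 1%nat) :: (peval hpoly r3, 1%nat) :: (peval hpoly (/ r3), 1%nat) :: nil).
    split; [split|simpl; lia].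
    + assert (V1 : peval hpoly 1 = 2) by (rewrite peval_hpoly; ring).
      assert (V2 : peval hpoly r3 = 12) by (rewrite peval_hpoly, H; ring).
      assert (V3 : peval hpoly (/ r3) = 4 / 9).
      { rewrite peval_hpoly. replace (/ r3 * / r3) with (/ (r3 * r3)) by (field; lra). rewrite H. field. }
      cbn [map fst]. rewrite V1, V2, V3. repeat constructor; cbn [In]; lra.
    + repeat apply Forall_cons; try apply Forall_nil; eapply zero_entry_reparam; eauto; try lra.
      * apply example_V_1.
      * apply example_V_r3.
      * apply example_V_inv_r3.
Qed.

Theorem theorem1p2 :
  (* H(1) <= 3 *)
  (forall (c : curve) (f1 g1 f2 g2 : nat -> nat -> R),
     not_identically_zero (melnikov c 1 f1 g1 f2 g2) ->
     zeros_at_most (melnikov c 1 f1 g1 f2 g2) 3) /\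
  (* H(1) >= 3 *)
  (forall c : curve, exists f1 g1 f2 g2 : nat -> nat -> R,
     not_identically_zero (melnikov c 1 f1 g1 f2 g2) /\
     zeros_at_least (melnikov c 1 f1 g1 f2 g2) 3) /\
  (* H(n) <= 2n + 5[(n-1)/2] + 4 for n >= 2 *)
  (forall (n : nat), (2 <= n)%nat ->
   forall (c : curve) (f1 g1 f2 g2 : nat -> nat -> R),
     not_identically_zero (melnikov c n f1 g1 f2 g2) ->
     zeros_at_most (melnikov c n f1 g1 f2 g2) (2 * n + 5 * ((n - 1) / 2) + 4)).
Proof.
  split; [exact melnikov_deg1_upper|split; [exact melnikov_deg1_lower|exact melnikov_upper]].
Qed.
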